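(* Let $\mu$ be a Borel probability measure on $[0,1]$. (1) There is a constant $c$ independent of $N$ such that for every $N\in\mathbb{N}$ there exist points $x_1,\dots,x_N\in[0,1]$ with $D^*_N\big(\mu;\frac1N\sum_{i=1}^N\delta_{x_i}\big)\leq \frac{c}{N}$. (2) There exist a sequence $(x_k)_{k\in\mathbb{N}}\subseteq[0,1]$ and a constant $c$ independent of $N$ such that for all integers $N\geq2$, $D^*_N\big(\mu;\frac1N\sum_{i=1}^N\delta_{x_i}\big)\leq c\frac{\log N}{N}$. (3) Suppose $\mu$ has no point masses (i.e. $\mu(\{x\})=0$ for all $x\in[0,1]$). Then for every $N$ and every finite set $x_1,\dots,x_N\in[0,1]$, $D^*_N\big(\mu;\frac1N\sum_{i=1}^N\delta_{x_i}\big)\geq\frac{1}{2N}$. Moreover, there is a constant $c>0$ such that for every sequence $(x_k)_{k\in\mathbb{N}}\subseteq[0,1]$, the inequality $D^*_N\big(\mu;\frac1N\sum_{i=1}^N\delta_{x_i}\big)\geq c\frac{\log N}{N}$ holds for infinitely many $N\in\mathbb{N}$.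
   Context: $\delta_y$ denotes the Dirac measure at $y$. For probability measures $\mu,\nu$ on $[0,1]$, the star-discrepancy is $D^*_N(\mu;\nu)=\sup_{b\in[0,1]}|\mu([0,b))-\nu([0,b))|$ (supremum over half-open intervals anchored at $0$). *)

From Stdlib Require Import Reals Lra Classical ClassicalEpsilon.
Open Scope R_scope.

Inductive borel : (R -> Prop) -> Prop :=
| borel_halfline (b : R) : borel (fun x => x < b)
| borel_compl (A : R -> Prop) : borel A -> borel (fun x => ~ A x)
| borel_union (A : nat -> R -> Prop) :
    (forall n, borel (A n)) -> borel (fun x => exists n, A n x).

(* A Borel probability measure on [0,1], represented as a countably additive
   probability measure on the Borel sets of R carried by [0,1]. *)
Record prob_measure : Type := {
  pm : (R -> Prop) -> R;
  pm_ext : forall A B : R -> Prop, (forall x, A x <-> B x) -> pm A = pm B;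
  pm_nonneg : forall A, borel A -> 0 <= pm A;
  pm_total : pm (fun x => 0 <= x <= 1) = 1;
  pm_outside : pm (fun x => ~ (0 <= x <= 1)) = 0;
  pm_sigma_additive : forall A : nat -> R -> Prop,
    (forall n, borel (A n)) ->
    (forall i j, i <> j -> forall x, A i x -> A j x -> False) ->
    infinite_sum (fun n => pm (A n)) (pm (fun x => exists n, A n x))
}.

(* Supremum of a set of reals (0 if it has no least upper bound). *)
Definition sup_R (E : R -> Prop) : R :=
  match excluded_middle_informative (exists m, is_lub E m) with
  | left H => proj1_sig (constructive_indefinite_description _ H)
  | right _ => 0
  end.

Fixpoint count_below (x : nat -> R) (N : nat) (b : R) : R :=
  match N with
  | O => 0
  | S n => count_below x n b + (if Rlt_dec (x (S n)) b then 1 else 0)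
  end.

Definition empirical (x : nat -> R) (N : nat) (b : R) : R :=
  count_below x N b / INR N.

Definition star_disc (mu : prob_measure) (x : nat -> R) (N : nat) : R :=
  sup_R (fun r => exists b, 0 <= b <= 1 /\
          r = Rabs (pm mu (fun y => 0 <= y < b) - empirical x N b)).

Definition no_atoms (mu : prob_measure) : Prop :=
  forall a, 0 <= a <= 1 -> pm mu (fun y => y = a) = 0.

(** Let [F b = mu [0,b)] and let [Q] be its generalised inverse.  Since [Q u < b <-> u < F b],
    the points [Q y_i] have the same star discrepancy with respect to [mu] as the [y_i] have
    with respect to Lebesgue measure, tested only at the levels [F b].  Parts (1) and (2) thus
    follow from the midpoint grid [(2i-1)/2N] and from the van der Corput sequence, whose
    counting function satisfies a halving recursion with an error of [1/2] per step.

    When [mu] has no atoms, [F] attains every level in [[0,1)], so the discrepancy of the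
    [x_i] with respect to [mu] dominates the local discrepancies of the [F x_i] with respect to
    Lebesgue measure.  The bound [1/(2N)] comes from testing just below and just above the
    smallest point.  The [log N] bound is Schmidt's theorem, proved by Halasz's Riesz-product
    method: on the grid of times [m < 2^n] and levels [t = p 2^-(n+2)], the local discrepancy
    [#{i <= m : y_i < t} - m t] is tested against [prod_j (1 + f_j / 4)], where [f_j] is a
    product of Haar functions in time and level supported on the dyadic boxes of area [1/2]
    that contain no point.  On such a box the count does not depend on [t], so the local
    discrepancy has a Haar coefficient of definite sign; at most half of the boxes of each
    scale are occupied, so each of the [n] scales contributes proportionally to the volume of
    the grid, whereas the Riesz product is nonnegative with mean one. *)

From Stdlib Require Import ZArith Reals Lra Lia ClassicalEpsilon FunctionalExtensionality PropExtensionality.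
Open Scope R_scope.

(** * Finite sums *)

Fixpoint sumR (f : nat -> R) (n : nat) : R :=
  match n with O => 0 | S k => sumR f k + f k end.

Lemma sumR_ext f g n : (forall i, (i < n)%nat -> f i = g i) -> sumR f n = sumR g n.
Proof. induction n; simpl; intros H; auto. rewrite IHn by (intros; apply H; lia). rewrite H by lia; auto.
Qed.

Lemma sumR_plus f g n : sumR (fun i => f i + g i) n = sumR f n + sumR g n.
Proof. induction n; simpl; lra.
Qed.

Lemma sumR_minus f g n : sumR (fun i => f i - g i) n = sumR f n - sumR g n.
Proof. induction n; simpl; lra.
Qed.

Lemma sumR_scal c f n : sumR (fun i => c * f i) n = c * sumR f n.
Proof. induction n; simpl; [ring | rewrite IHn; ring].
Qed.

Lemma sumR_scalr c f n : sumR (fun i => f i * c) n = sumR f n * c.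
Proof. induction n; simpl; [ring | rewrite IHn; ring].
Qed.

Lemma sumR_const c n : sumR (fun _ => c) n = INR n * c.
Proof. induction n; simpl sumR. simpl; ring. rewrite IHn, S_INR; ring.
Qed.

Lemma sumR_zero n : sumR (fun _ => 0) n = 0.
Proof. rewrite sumR_const; ring.
Qed.

Lemma sumR_le f g n : (forall i, (i < n)%nat -> f i <= g i) -> sumR f n <= sumR g n.
Proof. induction n; simpl; intros H; [lra|]. assert (f n <= g n) by (apply H; lia).
  assert (sumR f n <= sumR g n) by (apply IHn; intros; apply H; lia). lra.
Qed.

Lemma sumR_nonneg f n : (forall i, (i < n)%nat -> 0 <= f i) -> 0 <= sumR f n.
Proof. intros H. rewrite <- (sumR_zero n). apply sumR_le. auto.
Qed.

Lemma sumR_abs f n : Rabs (sumR f n) <= sumR (fun i => Rabs (f i)) n.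
Proof. induction n; simpl. rewrite Rabs_R0; lra.
  eapply Rle_trans; [apply Rabs_triang|]. lra.
Qed.

Lemma sumR_add f a b : sumR f (a + b) = sumR f a + sumR (fun i => f (a + i)%nat) b.
Proof. induction b; simpl. rewrite Nat.add_0_r; ring. rewrite Nat.add_succ_r; simpl. rewrite IHb; ring.
Qed.

Lemma sumR_block f a b : sumR f (a * b) = sumR (fun x => sumR (fun y => f (x * b + y)%nat) b) a.
Proof. induction a; simpl sumR at 2; auto. rewrite Nat.mul_succ_l, sumR_add, IHa. reflexivity.
Qed.

Lemma sumR_swap (F : nat -> nat -> R) a b :
  sumR (fun i => sumR (fun j => F i j) b) a = sumR (fun j => sumR (fun i => F i j) a) b.
Proof. induction a; simpl. rewrite sumR_zero; auto.
  rewrite IHa, <- sumR_plus. auto.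
Qed.

Lemma sumR_prod (f g : nat -> R) a b :
  sumR (fun i => sumR (fun j => f i * g j) b) a = sumR f a * sumR g b.
Proof. rewrite <- sumR_scalr. apply sumR_ext; intros. apply sumR_scal.
Qed.

Lemma sumR_ge_term f n k : (k < n)%nat -> (forall i, (i < n)%nat -> 0 <= f i) -> f k <= sumR f n.
Proof. induction n; intros Hk H; [lia|]. simpl.
  destruct (Nat.eq_dec k n). subst. assert (0 <= sumR f n) by (apply sumR_nonneg; intros; apply H; lia). lra.
  assert (f k <= sumR f n) by (apply IHn; [lia| intros; apply H; lia]). assert (0 <= f n) by (apply H; lia). lra.
Qed.

Lemma Rabs_le_inv x a : Rabs x <= a -> - a <= x <= a.
Proof. unfold Rabs. destruct (Rcase_abs x); intros; lra.
Qed.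

(** * Borel sets and measures *)

Lemma pred_ext (A B : R -> Prop) : (forall x, A x <-> B x) -> A = B.
Proof. intros H. apply functional_extensionality; intros x. apply propositional_extensionality; auto.
Qed.

Lemma borel_ext A B : (forall x, A x <-> B x) -> borel A -> borel B.
Proof. intros H. rewrite (pred_ext A B H); auto.
Qed.

Lemma borel_union2 A B : borel A -> borel B -> borel (fun x => A x \/ B x).
Proof. intros HA HB.
  apply (borel_ext (fun x => exists n, (fun n => match n with O => A | _ => B end) n x)).
  - intros x; split. intros [[|n] H]; auto. intros [H|H]; [exists O|exists 1%nat]; auto.
  - apply borel_union. intros [|n]; auto.
Qed.

Lemma borel_inter A B : borel A -> borel B -> borel (fun x => A x /\ B x).
Proof. intros HA HB.
  apply (borel_ext (fun x => ~ (~ A x \/ ~ B x))).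
  - intros x; tauto.
  - apply borel_compl, borel_union2; apply borel_compl; auto.
Qed.

Lemma borel_lt b : borel (fun x => x < b).
Proof. apply borel_halfline.
Qed.

Lemma borel_ge b : borel (fun x => b <= x).
Proof. apply (borel_ext (fun x => ~ x < b)). intros; lra. apply borel_compl, borel_lt.
Qed.

Lemma exists_inv_succ_lt e : 0 < e -> exists k : nat, / (INR k + 1) < e.
Proof. intros He. destruct (archimed (/ e)) as [H1 _].
  assert (0 < IZR (up (/e))) by (assert (0 < /e) by (apply Rinv_0_lt_compat; lra); lra).
  assert (0 <= up (/e))%Z by (apply le_IZR; lra).
  exists (Z.to_nat (up (/ e))). rewrite INR_IZR_INZ, Z2Nat.id by auto.
  assert (/e < IZR (up (/e)) + 1) by lra.
  apply Rinv_lt_contravar in H2; [|apply Rmult_lt_0_compat; try apply Rinv_0_lt_compat; lra].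
  rewrite Rinv_inv in H2. lra.
Qed.

Lemma inv_succ_pos k : 0 < / (INR k + 1).
Proof. apply Rinv_0_lt_compat. pose proof (pos_INR k); lra.
Qed.

Lemma borel_gt b : borel (fun x => b < x).
Proof. apply (borel_ext (fun x => exists n, b + / (INR n + 1) <= x)).
  - intros x; split. intros [n H]. pose proof (inv_succ_pos n). lra.
    intros H. destruct (exists_inv_succ_lt (x - b)) as [k Hk]; [lra|]. exists k; lra.
  - apply borel_union; intros; apply borel_ge.
Qed.

Lemma borel_le b : borel (fun x => x <= b).
Proof. apply (borel_ext (fun x => ~ b < x)). intros; lra. apply borel_compl, borel_gt.
Qed.

Lemma borel_Ico a b : borel (fun x => a <= x < b).
Proof. apply borel_inter; [apply borel_ge|apply borel_lt].
Qed.

Lemma borel_Icc a b : borel (fun x => a <= x <= b).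
Proof. apply borel_inter; [apply borel_ge|apply borel_le].
Qed.

Lemma borel_Ioo a b : borel (fun x => a < x < b).
Proof. apply borel_inter; [apply borel_gt|apply borel_lt].
Qed.

Lemma borel_pt a : borel (fun x => x = a).
Proof. apply (borel_ext (fun x => a <= x <= a)). intros; lra. apply borel_Icc.
Qed.

Lemma borel_false : borel (fun _ => False).
Proof. apply (borel_ext (fun x => 0 <= x < 0)). intros; lra. apply borel_Ico.
Qed.

Lemma infinite_sum_Un_cv s l : infinite_sum s l -> Un_cv (fun n => sum_f_R0 s n) l.
Proof. intros H e He. destruct (H e He) as [N HN]. exists N; intros n Hn. apply HN; auto.
Qed.

Lemma pm_empty (mu : prob_measure) : pm mu (fun _ => False) = 0.
Proof.
  pose proof (pm_sigma_additive mu (fun _ _ => False) (fun _ => borel_false) (fun i j _ x H _ => H)) as H.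
  rewrite (pm_ext mu _ (fun _ => False)) in H by (intros; split; [intros [_ []]|tauto]).
  apply infinite_sum_Un_cv in H. set (c := pm mu (fun _ => False)) in *.
  assert (Hs : forall n, sum_f_R0 (fun _ => c) n = INR (S n) * c).
  { induction n; simpl sum_f_R0. simpl; ring. rewrite IHn. rewrite (S_INR (S n)). ring. }
  destruct (Req_dec c 0) as [|Hc]; auto. exfalso.
  destruct (H (Rabs c / 2)) as [N HN]. apply Rabs_pos_lt in Hc. lra.
  specialize (HN (S N) ltac:(lia)). rewrite Hs in HN. unfold Rdist in HN.
  replace (INR (S (S N)) * c - c) with (INR (S N) * c) in HN by (rewrite (S_INR (S N)); ring).
  rewrite Rabs_mult, Rabs_right in HN by (apply Rle_ge, pos_INR).
  assert (1 <= INR (S N)) by (rewrite S_INR; pose proof (pos_INR N); lra).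
  apply Rabs_pos_lt in Hc. nra.
Qed.

Lemma pm_union_disjoint (mu : prob_measure) A B : borel A -> borel B -> (forall x, A x -> B x -> False) ->
  pm mu (fun x => A x \/ B x) = pm mu A + pm mu B.
Proof. intros HA HB Hd.
  set (F := fun n : nat => match n with O => A | 1%nat => B | _ => fun _ => False end).
  assert (HF : forall n, borel (F n)) by (intros [|[|n]]; simpl; auto using borel_false).
  assert (Hdis : forall i j, i <> j -> forall x, F i x -> F j x -> False).
  { intros [|[|i]] [|[|j]] Hij x; simpl; try tauto; try lia; eauto. }
  pose proof (pm_sigma_additive mu F HF Hdis) as H.
  rewrite (pm_ext mu (fun x => exists n, F n x) (fun x => A x \/ B x)) in H.
  2:{ intros x; split. intros [[|[|n]] Hn]; simpl in Hn; tauto. intros [H0|H0]; [exists O|exists 1%nat]; auto. }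
  apply infinite_sum_Un_cv in H.
  assert (Hs : forall n, sum_f_R0 (fun n => pm mu (F n)) (S n) = pm mu A + pm mu B).
  { induction n. simpl; ring. change (sum_f_R0 (fun n => pm mu (F n)) (S (S n))) with
      (sum_f_R0 (fun n => pm mu (F n)) (S n) + pm mu (F (S (S n)))). rewrite IHn. simpl F. rewrite pm_empty; ring. }
  apply (UL_sequence _ _ _ H). intros e He. exists 1%nat. intros n Hn.
  destruct n; [lia|]. rewrite Hs.
  unfold Rdist; rewrite Rminus_diag, Rabs_R0; lra.
Qed.

Lemma pm_mono (mu : prob_measure) A B : borel A -> borel B -> (forall x, A x -> B x) -> pm mu A <= pm mu B.
Proof. intros HA HB H.
  rewrite (pm_ext mu B (fun x => A x \/ (B x /\ ~ A x))) by (intros x; split; [destruct (classic (A x)); tauto | intros [?|[? ?]]; auto]).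
  rewrite pm_union_disjoint; auto. pose proof (pm_nonneg mu (fun x => B x /\ ~ A x) (borel_inter _ _ HB (borel_compl _ HA))). lra.
  apply borel_inter; auto. apply borel_compl; auto. tauto.
Qed.

Lemma pm_le1 (mu : prob_measure) A : borel A -> pm mu A <= 1.
Proof. intros HA.
  apply Rle_trans with (pm mu (fun x => (0 <= x <= 1) \/ ~ (0 <= x <= 1))).
  apply pm_mono; auto. apply borel_union2; [apply borel_Icc | apply borel_compl, borel_Icc]. intros; tauto.
  rewrite pm_union_disjoint, pm_total, pm_outside. lra. apply borel_Icc. apply borel_compl, borel_Icc. tauto.
Qed.

Lemma pm_increasing_union (mu : prob_measure) (A : nat -> R -> Prop) :
  (forall n, borel (A n)) -> (forall n x, A n x -> A (S n) x) ->
  Un_cv (fun n => pm mu (A n)) (pm mu (fun x => exists n, A n x)).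
Proof. intros HA Hinc.
  assert (Hmono : forall i j x, (i <= j)%nat -> A i x -> A j x).
  { intros i j x Hij. induction Hij; auto. }
  set (D := fun n : nat => match n with O => A O | S k => fun x => A (S k) x /\ ~ A k x end).
  assert (HD : forall n, borel (D n)). { intros [|n]; simpl; auto. apply borel_inter; auto. apply borel_compl; auto. }
  assert (Hdis : forall i j, i <> j -> forall x, D i x -> D j x -> False).
  { assert (forall i j x, (i < j)%nat -> D i x -> D j x -> False).
    { intros i [|j] x Hij; [lia|]. simpl. intros Hi [_ Hj]. apply Hj. apply (Hmono i j); [lia|].
      destruct i; simpl in Hi; tauto. }
    intros i j Hij x. destruct (Nat.lt_total i j) as [?|[?|?]]; [eauto|tauto|]. intros; eauto. }
  pose proof (pm_sigma_additive mu D HD Hdis) as H.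
  rewrite (pm_ext mu (fun x => exists n, D n x) (fun x => exists n, A n x)) in H.
  2:{ intros x; split. intros [[|n] Hn]; simpl in Hn. eauto. exists (S n); tauto.
      intros [n Hn]. induction n. exists O; auto. destruct (classic (A n x)); auto. exists (S n); simpl; auto. }
  apply infinite_sum_Un_cv in H.
  assert (Hs : forall n, sum_f_R0 (fun k => pm mu (D k)) n = pm mu (A n)).
  { induction n; simpl; auto. rewrite IHn.
    rewrite (pm_ext mu (A (S n)) (fun x => A n x \/ (A (S n) x /\ ~ A n x))).
    rewrite pm_union_disjoint; auto. apply (HD (S n)). simpl. tauto.
    intros x; split. tauto. intros [?|[? ?]]; auto. }
  intros e He. destruct (H e He) as [N HN]. exists N; intros. rewrite <- Hs. apply HN; auto.
Qed.

(** * Distribution function and quantile *)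

Definition cdf (mu : prob_measure) (b : R) : R := pm mu (fun y => 0 <= y < b).

Lemma cdf_range mu b : 0 <= cdf mu b <= 1.
Proof. unfold cdf; split; [apply pm_nonneg|apply pm_le1]; apply borel_Ico.
Qed.

Lemma cdf_mono mu b b' : b <= b' -> cdf mu b <= cdf mu b'.
Proof. intros. unfold cdf. apply pm_mono; try apply borel_Ico. intros; lra.
Qed.

Lemma cdf_0 mu : cdf mu 0 = 0.
Proof. unfold cdf. rewrite (pm_ext mu _ (fun _ => False)) by (intros; lra). apply pm_empty.
Qed.

Lemma Un_cv_le_bound f l u : Un_cv f l -> (forall k, f k <= u) -> l <= u.
Proof. intros H Hf. destruct (Rle_dec l u); auto. destruct (H (l - u)) as [N HN]; [lra|].
  specialize (HN N (le_n _)). specialize (Hf N). unfold Rdist in HN. apply Rabs_def2 in HN. lra.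
Qed.

Lemma Un_cv_ge_bound f l u K : Un_cv f l -> (forall k, (K <= k)%nat -> u <= f k) -> u <= l.
Proof. intros H Hf. destruct (Rle_dec u l); auto. destruct (H (u - l)) as [N HN]; [lra|].
  specialize (HN (max N K) ltac:(lia)). specialize (Hf (max N K) ltac:(lia)). unfold Rdist in HN. apply Rabs_def2 in HN. lra.
Qed.

Lemma inv_succ_decr k : / (INR (S k) + 1) < / (INR k + 1).
Proof. apply Rinv_lt_contravar. pose proof (pos_INR k); rewrite S_INR; nra. rewrite S_INR; lra.
Qed.

Lemma inv_succ_le1 k : / (INR k + 1) <= 1.
Proof. pose proof (pos_INR k). rewrite <- Rinv_1. apply Rinv_le_contravar; lra.
Qed.

Lemma cdf_left_limit mu b : Un_cv (fun k => cdf mu (b - / (INR k + 1))) (cdf mu b).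
Proof.
  pose proof (pm_increasing_union mu (fun k y => 0 <= y < b - / (INR k + 1))) as H. cbv beta in H.
  unfold cdf. rewrite (pm_ext mu (fun y => 0 <= y < b) (fun x => exists n, 0 <= x < b - / (INR n + 1))).
  apply H. intros; apply borel_Ico. intros n x Hx. pose proof (inv_succ_decr n). lra.
  intros x; split. intros Hx. destruct (exists_inv_succ_lt (b - x)) as [k Hk]; [lra|]. exists k; lra.
  intros [n Hn]. pose proof (inv_succ_pos n); lra.
Qed.

Lemma cdf_right_limit mu b : 0 <= b -> Un_cv (fun k => cdf mu (b + / (INR k + 1))) (cdf mu b + pm mu (fun y => y = b)).
Proof. intros Hb.
  pose proof (pm_increasing_union mu (fun k y => b + / (INR k + 1) <= y < b + 1)) as H. cbv beta in H.
  rewrite (pm_ext mu (fun x => exists n, b + / (INR n + 1) <= x < b + 1) (fun y => b < y < b + 1)) in H.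
  2:{ intros x; split. intros [n Hn]. pose proof (inv_succ_pos n); lra.
      intros Hx. destruct (exists_inv_succ_lt (x - b)) as [k Hk]; [lra|]. exists k; lra. }
  assert (H1 : pm mu (fun y => b <= y < b + 1) = pm mu (fun y => y = b) + pm mu (fun y => b < y < b + 1)).
  { rewrite <- pm_union_disjoint. apply pm_ext. intros; lra. apply borel_pt. apply borel_Ioo. intros; lra. }
  assert (H2 : forall k, cdf mu (b + / (INR k + 1)) = cdf mu b + pm mu (fun y => b <= y < b + 1) - pm mu (fun y => b + / (INR k + 1) <= y < b + 1)).
  { intros k. pose proof (inv_succ_pos k). pose proof (inv_succ_le1 k). unfold cdf.
    rewrite (pm_ext mu (fun y => 0 <= y < b + / (INR k + 1)) (fun y => 0 <= y < b \/ b <= y < b + / (INR k + 1))) by (intros; lra).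
    rewrite (pm_ext mu (fun y => b <= y < b + 1) (fun y => b <= y < b + / (INR k + 1) \/ b + / (INR k + 1) <= y < b + 1)) by (intros; lra).
    rewrite !pm_union_disjoint; try apply borel_Ico; try (intros; lra). }
  assert (H' : Un_cv (fun n => pm mu (fun y => b + / (INR n + 1) <= y < b + 1)) (pm mu (fun y => b < y < b + 1))).
  { apply H. intros; apply borel_Ico. intros n x Hx. pose proof (inv_succ_decr n). lra. }
  intros e He. destruct (H' e He) as [N HN]. exists N. intros n Hn. rewrite H2. specialize (HN n Hn).
  unfold Rdist in *. rewrite H1. replace (cdf mu b + (pm mu (fun y : R => y = b) + pm mu (fun y : R => b < y < b + 1)) -
   pm mu (fun y : R => b + / (INR n + 1) <= y < b + 1) - (cdf mu b + pm mu (fun y : R => y = b))) with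
   (- (pm mu (fun y : R => b + / (INR n + 1) <= y < b + 1) - pm mu (fun y : R => b < y < b + 1))) by ring.
  rewrite Rabs_Ropp; auto.
Qed.

Lemma cdf_1 mu : cdf mu 1 = 1 - pm mu (fun y => y = 1).
Proof. unfold cdf. pose proof (pm_total mu) as Ht.
  rewrite (pm_ext mu (fun x => 0 <= x <= 1) (fun x => 0 <= x < 1 \/ x = 1)) in Ht by (intros; lra).
  rewrite pm_union_disjoint in Ht. lra. apply borel_Ico. apply borel_pt. intros; lra.
Qed.

Lemma sup_R_lub E : (exists m, is_lub E m) -> is_lub E (sup_R E).
Proof. intros H. unfold sup_R. destruct (excluded_middle_informative _) as [H'|H']; [|tauto].
  destruct (constructive_indefinite_description _ H'); simpl; auto.
Qed.

Lemma sup_R_spec E : (exists x, E x) -> (exists M, forall x, E x -> x <= M) -> is_lub E (sup_R E).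
Proof. intros H1 [M HM]. apply sup_R_lub. destruct (completeness E) as [m Hm]; eauto. exists M; intros x Hx; auto.
Qed.

(* [sup_R] of a set without a least upper bound is [0], hence the hypothesis [0 <= c]. *)
Lemma sup_R_le E c : 0 <= c -> (forall x, E x -> x <= c) -> sup_R E <= c.
Proof. intros Hc H. unfold sup_R. destruct (excluded_middle_informative _) as [H'|H']; auto.
  destruct (constructive_indefinite_description _ H') as [m Hm]; simpl. destruct Hm as [_ Hm]. apply Hm. intros x Hx; auto.
Qed.

Lemma sup_R_ge E r : E r -> (exists M, forall x, E x -> x <= M) -> r <= sup_R E.
Proof. intros Hr HM. destruct (sup_R_spec E) as [H _]; eauto.
Qed.

Definition sublevel mu u := fun b => 0 <= b <= 1 /\ cdf mu b <= u.

Definition quantile mu u := sup_R (sublevel mu u).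

Lemma quantile_lub mu u : 0 <= u -> is_lub (sublevel mu u) (quantile mu u).
Proof. intros Hu. apply sup_R_spec. exists 0. split; [lra|]. rewrite cdf_0; auto.
  exists 1. intros x [Hx _]; lra.
Qed.

Lemma quantile_range mu u : 0 <= u -> 0 <= quantile mu u <= 1.
Proof. intros Hu. destruct (quantile_lub mu u Hu) as [H1 H2]. split.
  apply H1. split; [lra|]. rewrite cdf_0; auto. apply H2. intros x [Hx _]; lra.
Qed.

Lemma cdf_quantile_le mu u : 0 <= u -> cdf mu (quantile mu u) <= u.
Proof. intros Hu. set (q := quantile mu u). destruct (quantile_lub mu u Hu) as [H1 H2]. fold q in H1, H2.
  destruct (Req_dec q 0) as [Hq|Hq]. rewrite Hq, cdf_0; auto.
  apply (Un_cv_le_bound (fun k => cdf mu (q - / (INR k + 1)))). apply cdf_left_limit.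
  intros k. destruct (classic (exists s, sublevel mu u s /\ q - / (INR k + 1) <= s)) as [[s [[Hs1 Hs2] Hs3]]|Hn].
  - eapply Rle_trans; [apply cdf_mono, Hs3|auto].
  - exfalso. assert (q <= q - / (INR k + 1)).
    { apply H2. intros x Hx. destruct (Rle_dec x (q - / (INR k + 1))); auto.
      exfalso; apply Hn; exists x; split; auto; lra. }
    pose proof (inv_succ_pos k); lra.
Qed.

Lemma quantile_lt_iff mu u b : 0 <= u -> 0 <= b <= 1 -> (quantile mu u < b <-> u < cdf mu b).
Proof. intros Hu Hb. destruct (quantile_lub mu u Hu) as [H1 H2]. split.
  - intros Hq. destruct (Rlt_le_dec u (cdf mu b)); auto. assert (b <= quantile mu u) by (apply H1; split; auto). lra.
  - intros HG. destruct (Rlt_le_dec (quantile mu u) b); auto.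
    pose proof (cdf_mono mu _ _ r). pose proof (cdf_quantile_le mu u Hu). lra.
Qed.

Lemma cdf_onto mu : no_atoms mu -> forall u, 0 <= u < 1 -> exists b, 0 <= b <= 1 /\ cdf mu b = u.
Proof. intros Hna u Hu. set (q := quantile mu u). exists q.
  pose proof (quantile_range mu u ltac:(lra)) as Hr. fold q in Hr. split; auto.
  pose proof (cdf_quantile_le mu u ltac:(lra)) as Hle. fold q in Hle.
  destruct (Req_dec q 1) as [Hq|Hq].
  { rewrite Hq, cdf_1, (Hna 1) in *; lra. }
  destruct (quantile_lub mu u ltac:(lra)) as [H1 H2]. fold q in H1, H2.
  assert (u <= cdf mu q + pm mu (fun y => y = q)).
  { apply (Un_cv_ge_bound (fun k => cdf mu (q + / (INR k + 1))) _ _ 0%nat (cdf_right_limit mu q ltac:(lra))).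
    intros k _. destruct (Rle_dec (q + / (INR k + 1)) 1).
    - destruct (Rlt_le_dec u (cdf mu (q + / (INR k + 1)))); [lra|].
      assert (q + / (INR k + 1) <= q) by (apply H1; split; auto; pose proof (inv_succ_pos k); lra).
      pose proof (inv_succ_pos k); lra.
    - eapply Rle_trans; [|apply cdf_mono with (b := 1); lra]. rewrite cdf_1, (Hna 1); lra. }
  rewrite (Hna q) in H; lra.
Qed.

Lemma count_below_range x N b : 0 <= count_below x N b <= INR N.
Proof. induction N; simpl count_below. simpl; lra. rewrite S_INR. destruct (Rlt_dec _ _); lra.
Qed.

Lemma count_below_ext2 (x y : nat -> R) m a b :
  (forall i, (1 <= i <= m)%nat -> (x i < a <-> y i < b)) -> count_below x m a = count_below y m b.
Proof. induction m; intros H; simpl; auto. rewrite IHm by (intros; apply H; lia).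
  specialize (H (S m) ltac:(lia)). destruct (Rlt_dec _ a), (Rlt_dec _ b); tauto || lra.
Qed.

Lemma count_below_quantile mu (y : nat -> R) N b :
  (forall i, (1 <= i <= N)%nat -> 0 <= y i) -> 0 <= b <= 1 ->
  count_below (fun i => quantile mu (y i)) N b = count_below y N (cdf mu b).
Proof. intros Hy Hb. apply count_below_ext2. intros i Hi. apply quantile_lt_iff; auto.
Qed.

Lemma star_disc_quantile_le mu (y : nat -> R) N B :
  (forall i, (1 <= i <= N)%nat -> 0 <= y i) -> 0 <= B ->
  (forall u, 0 <= u <= 1 -> Rabs (u - count_below y N u / INR N) <= B) ->
  star_disc mu (fun i => quantile mu (y i)) N <= B.
Proof. intros Hy HB H. unfold star_disc. apply sup_R_le; auto.
  intros r [b [Hb ->]]. unfold empirical. rewrite count_below_quantile; auto. apply H. apply cdf_range.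
Qed.

(** * Upper bounds: midpoint grid and van der Corput sequence *)

Lemma exists_nat_lt_le_succ z : 0 < z -> exists j : nat, INR j < z <= INR j + 1.
Proof. intros Hz. destruct (exists_inv_succ_lt (/ z)) as [M HM]. apply Rinv_0_lt_compat; auto.
  assert (z < INR M + 1). { apply Rinv_lt_contravar in HM. rewrite !Rinv_inv in HM; auto.
    apply Rmult_lt_0_compat; [apply inv_succ_pos | apply Rinv_0_lt_compat; auto]. }
  clear HM. revert z Hz H. induction M; intros z Hz H.
  exists O. simpl in *. lra.
  rewrite S_INR in H. destruct (Rle_dec z (INR M)) as [H1|H1].
  apply IHM; auto; lra. destruct (Rle_dec z (INR M + 1)) as [H2|H2].
  exists M; lra. exists (S M). rewrite S_INR. lra.
Qed.

Lemma midpoint_grid_disc N u : (1 <= N)%nat -> 0 <= u <= 1 ->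
  Rabs (u - count_below (fun i => (2 * INR i - 1) / (2 * INR N)) N u / INR N) <= 1 / INR N.
Proof. intros HN Hu. assert (HN' : 1 <= INR N) by (apply (le_INR 1); auto).
  destruct (exists_nat_lt_le_succ (INR N * u + /2)) as [j [Hj1 Hj2]]. nra.
  assert (Hc : forall K, count_below (fun i => (2 * INR i - 1) / (2 * INR N)) K u = INR (Nat.min K j)).
  { induction K. simpl; auto. cbn [count_below]. rewrite IHK.
    destruct (Rlt_dec _ _) as [H|H].
    - assert (S K <= j)%nat. { destruct (le_lt_dec (S K) j); auto. exfalso.
        apply (le_INR (S j)) in l. rewrite S_INR in l. apply Rmult_lt_compat_r with (r := 2 * INR N) in H; [|lra].
        unfold Rdiv in H. rewrite Rmult_assoc, Rinv_l, Rmult_1_r in H by lra. rewrite S_INR in H, l; lra. }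
      rewrite !Nat.min_l by lia. rewrite S_INR; auto.
    - assert (j <= K)%nat. { destruct (le_lt_dec j K); auto. exfalso. apply H.
        apply (le_INR (S K)) in l. rewrite S_INR in l.
        apply Rmult_lt_reg_r with (r := 2 * INR N); [lra|]. unfold Rdiv. rewrite Rmult_assoc, Rinv_l, Rmult_1_r by lra. rewrite S_INR; nra. }
      rewrite !Nat.min_r by lia. lra. }
  rewrite Hc. destruct (le_lt_dec j N).
  - rewrite Nat.min_r by auto. replace (u - INR j / INR N) with ((INR N * u - INR j) / INR N) by (field; lra).
    unfold Rdiv. rewrite Rabs_mult, Rabs_inv, (Rabs_right (INR N)) by lra. apply Rmult_le_compat_r.
    apply Rlt_le, Rinv_0_lt_compat; lra. apply Rabs_le; lra.
  - apply (le_INR (S N)) in l. rewrite S_INR in l. nra.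
Qed.

(* Radical inverse of [n] in base 2 computed from its [k] lowest binary digits; [k = n] digits suffice. *)
Fixpoint vdc_digits (k n : nat) : R :=
  match k with O => 0 | S k' => (if Nat.even n then 0 else / 2) + vdc_digits k' (Nat.div2 n) / 2 end.
Definition vdc n := vdc_digits n n.

Lemma vdc_digits_S k n : vdc_digits (S k) n = (if Nat.even n then 0 else / 2) + vdc_digits k (Nat.div2 n) / 2.
Proof. reflexivity.
Qed.

Lemma vdc_digits_stable k : forall n, (n <= k)%nat -> vdc_digits (S k) n = vdc_digits k n.
Proof. induction k; intros n Hn.
  - assert (n = O) by lia; subst. simpl. lra.
  - rewrite (vdc_digits_S (S k) n), (vdc_digits_S k n), IHk; auto.
    destruct n; [simpl; lia|]. pose proof (Nat.lt_div2 (S n)). lia.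
Qed.

Lemma vdc_digits_vdc k n : (n <= k)%nat -> vdc_digits k n = vdc n.
Proof. intros H. unfold vdc. induction H; auto. rewrite vdc_digits_stable; auto.
Qed.

Lemma vdc_even r : vdc (2 * r) = vdc r / 2.
Proof. destruct r as [|r]; [unfold vdc; simpl; lra|].
  unfold vdc at 1. replace (2 * S r)%nat with (S (S (2 * r))) at 1 by lia. rewrite vdc_digits_S.
  rewrite Nat.even_even, Nat.div2_double, vdc_digits_vdc by lia. lra.
Qed.

Lemma vdc_odd r : vdc (2 * r + 1) = / 2 + vdc r / 2.
Proof. unfold vdc at 1. replace (2 * r + 1)%nat with (S (2 * r)) at 1 by lia. rewrite vdc_digits_S.
  rewrite Nat.even_odd, Nat.div2_odd', vdc_digits_vdc by lia. auto.
Qed.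

Lemma vdc_digits_range k n : 0 <= vdc_digits k n < 1.
Proof. revert n; induction k; intros n; simpl. lra. specialize (IHk (Nat.div2 n)). destruct (Nat.even n); lra.
Qed.

Lemma vdc_range n : 0 <= vdc n < 1.
Proof. apply vdc_digits_range.
Qed.

Definition vdc_count N u := sumR (fun r => if Rlt_dec (vdc r) u then 1 else 0) N.

Lemma count_below_vdc N u : count_below (fun i => vdc (pred i)) N u = vdc_count N u.
Proof. induction N; simpl; auto. rewrite IHN. auto.
Qed.

Lemma sumR_even_odd (g : nat -> R) M :
  sumR g (2 * M) = sumR (fun s => g (2 * s)%nat) M + sumR (fun s => g (2 * s + 1)%nat) M.
Proof. induction M. simpl; lra. replace (2 * S M)%nat with (S (S (2 * M))) by lia. cbn [sumR].
  rewrite IHM. replace (S (2 * M)) with (2 * M + 1)%nat by lia. lra.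
Qed.

Lemma vdc_count_even M u : vdc_count (2 * M) u = vdc_count M (2 * u) + vdc_count M (2 * u - 1).
Proof. unfold vdc_count. rewrite sumR_even_odd. f_equal; apply sumR_ext; intros i _.
  rewrite vdc_even. destruct (Rlt_dec _ _), (Rlt_dec _ _); auto; lra.
  rewrite vdc_odd. destruct (Rlt_dec _ _), (Rlt_dec _ _); auto; lra.
Qed.

Lemma vdc_count_odd M u : vdc_count (2 * M + 1) u = vdc_count (M + 1) (2 * u) + vdc_count M (2 * u - 1).
Proof. replace (2 * M + 1)%nat with (S (2 * M)) by lia. replace (M + 1)%nat with (S M) by lia.
  change (vdc_count (S (2*M)) u) with (vdc_count (2*M) u + (if Rlt_dec (vdc (2*M)) u then 1 else 0)).
  change (vdc_count (S M) (2*u)) with (vdc_count M (2*u) + (if Rlt_dec (vdc M) (2*u) then 1 else 0)).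
  rewrite vdc_count_even, vdc_even.
  destruct (Rlt_dec (vdc M / 2) u), (Rlt_dec (vdc M) (2 * u)); lra.
Qed.

Lemma vdc_count_low N v : v <= 0 -> vdc_count N v = 0.
Proof. intros Hv. unfold vdc_count. transitivity (sumR (fun _ => 0) N); [|apply sumR_zero]. apply sumR_ext; intros.
  destruct (Rlt_dec _ _); auto. pose proof (vdc_range i); lra.
Qed.

Lemma vdc_count_high N v : 1 <= v -> vdc_count N v = INR N.
Proof. intros Hv. unfold vdc_count. transitivity (sumR (fun _ => 1) N); [|rewrite sumR_const; ring]. apply sumR_ext; intros.
  destruct (Rlt_dec _ _); auto. pose proof (vdc_range i); lra.
Qed.

(* For [N >= 2] the recursion [N -> ceil (N/2)] divides [N] by at least [3/2] and costs an error of [1/2]. *)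
Definition vdc_bound N := 1 + ln (INR N) / (2 * ln (3 / 2)).

Lemma ln32_pos : 0 < ln (3 / 2).
Proof. rewrite <- ln_1. apply ln_increasing; lra.
Qed.

Lemma vdc_bound_mono a b : (1 <= a <= b)%nat -> vdc_bound a <= vdc_bound b.
Proof. intros H. unfold vdc_bound. pose proof ln32_pos.
  assert (ln (INR a) <= ln (INR b)). { destruct (Nat.eq_dec a b). subst; lra.
   apply Rlt_le, ln_increasing. apply (lt_INR 0); lia. apply lt_INR; lia. }
  unfold Rdiv. apply Rplus_le_compat_l, Rmult_le_compat_r; auto. apply Rlt_le, Rinv_0_lt_compat; lra.
Qed.

Lemma ln_INR_nonneg a : (1 <= a)%nat -> 0 <= ln (INR a).
Proof. intros. rewrite <- ln_1. destruct (Nat.eq_dec a 1). subst; simpl; lra.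
  apply Rlt_le, ln_increasing; try lra. apply (lt_INR 1); lia.
Qed.

Lemma vdc_bound_ge1 a : (1 <= a)%nat -> 1 <= vdc_bound a.
Proof. intros H. unfold vdc_bound. pose proof ln32_pos. pose proof (ln_INR_nonneg a H).
  assert (0 <= ln (INR a) / (2 * ln (3 / 2))) by (apply Rmult_le_pos; auto; apply Rlt_le, Rinv_0_lt_compat; lra). lra.
Qed.

Lemma vdc_bound_step a N : (1 <= a)%nat -> 3 * INR a <= 2 * INR N -> vdc_bound a + / 2 <= vdc_bound N.
Proof. intros Ha H. unfold vdc_bound. pose proof ln32_pos.
  assert (HaR : 1 <= INR a) by (apply (le_INR 1); auto).
  assert (ln (INR a) <= ln (INR N) - ln (3 / 2)).
  { replace (ln (INR N) - ln (3/2)) with (ln (INR N * / (3 / 2))).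
    destruct (Req_dec (INR a) (INR N * / (3/2))) as [E|E]. rewrite E; lra.
    apply Rlt_le, ln_increasing. lra. assert (INR a <= INR N * / (3/2)). apply Rmult_le_reg_r with (3/2). lra.
    rewrite Rmult_assoc, Rinv_l, Rmult_1_r; lra. lra.
    assert (0 < INR N) by lra. rewrite ln_mult, ln_Rinv; try lra. }
  apply Rle_trans with (1 + (ln (INR N) - ln (3 / 2)) / (2 * ln (3 / 2)) + / 2).
  apply Rplus_le_compat_r, Rplus_le_compat_l. unfold Rdiv; apply Rmult_le_compat_r; auto. apply Rlt_le, Rinv_0_lt_compat; lra.
  right. field. lra.
Qed.

Definition clamp01 u := if Rle_dec u 0 then 0 else if Rle_dec 1 u then 1 else u.

Lemma vdc_count_1 u : vdc_count 1 u = if Rlt_dec 0 u then 1 else 0.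
Proof. unfold vdc_count; simpl. replace (vdc 0) with 0 by (unfold vdc; simpl; auto). lra.
Qed.

Lemma vdc_count_merge a b N u : (1 <= b)%nat -> (b <= a)%nat -> (a <= b + 1)%nat -> (a + b = N)%nat ->
  vdc_count N u = vdc_count a (2 * u) + vdc_count b (2 * u - 1) ->
  Rabs (vdc_count a (2 * u) - INR a * clamp01 (2 * u)) <= vdc_bound a ->
  Rabs (vdc_count b (2 * u - 1) - INR b * clamp01 (2 * u - 1)) <= vdc_bound b ->
  Rabs (vdc_count N u - INR N * clamp01 u) <= vdc_bound N.
Proof. intros H1 H2 H3 H4 Hs Ha Hb.
  assert (H5 : (3 * a <= 2 * N)%nat) by lia.
  assert (HbN : vdc_bound a + / 2 <= vdc_bound N).
  { apply vdc_bound_step; [lia|]. apply le_INR in H5. rewrite !mult_INR in H5. simpl in H5. lra. }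
  pose proof (vdc_bound_mono b a ltac:(lia)). pose proof (vdc_bound_ge1 b H1).
  assert (HN : INR a + INR b = INR N) by (rewrite <- plus_INR; f_equal; auto).
  assert (Hab : INR b <= INR a <= INR b + 1) by (split; [apply le_INR; auto| rewrite <- S_INR; apply le_INR; lia]).
  unfold clamp01. destruct (Rle_dec u 0).
  { rewrite vdc_count_low by lra. rewrite Rmult_0_r, Rminus_0_r, Rabs_R0. lra. }
  destruct (Rle_dec 1 u).
  { rewrite vdc_count_high by lra. rewrite Rmult_1_r, Rminus_diag, Rabs_R0. lra. }
  rewrite Hs. destruct (Rle_dec u (/ 2)).
  - rewrite (vdc_count_low b) by lra. unfold clamp01 in Ha. destruct (Rle_dec (2 * u) 0); [lra|].
    destruct (Rle_dec 1 (2 * u)).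
    + replace (vdc_count a (2 * u) + 0 - INR N * u) with ((vdc_count a (2 * u) - INR a * 1) + (INR a - INR N * u)) by ring.
      eapply Rle_trans; [apply Rabs_triang|]. assert (Rabs (INR a - INR N * u) <= / 2) by (assert (u = /2) by lra; subst u; apply Rabs_le; lra). lra.
    + replace (vdc_count a (2 * u) + 0 - INR N * u) with ((vdc_count a (2 * u) - INR a * (2 * u)) + u * (2 * INR a - INR N)) by ring.
      eapply Rle_trans; [apply Rabs_triang|]. assert (Rabs (u * (2 * INR a - INR N)) <= / 2) by (apply Rabs_le; nra). lra.
  - rewrite (vdc_count_high a) by lra. unfold clamp01 in Hb. destruct (Rle_dec (2 * u - 1) 0); [lra|].
    destruct (Rle_dec 1 (2 * u - 1)); [lra|].
    replace (INR a + vdc_count b (2 * u - 1) - INR N * u) with ((vdc_count b (2 * u - 1) - INR b * (2 * u - 1)) + (INR a - INR b) * (1 - u)) by (rewrite <- HN; ring).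
    eapply Rle_trans; [apply Rabs_triang|]. assert (Rabs ((INR a - INR b) * (1 - u)) <= / 2) by (apply Rabs_le; nra). lra.
Qed.

Lemma vdc_count_disc N : (1 <= N)%nat -> forall u, Rabs (vdc_count N u - INR N * clamp01 u) <= vdc_bound N.
Proof. induction N as [N IH] using lt_wf_ind. intros HN u.
  destruct (Nat.eq_dec N 1) as [->|HN1].
  { rewrite vdc_count_1. unfold clamp01, vdc_bound. simpl INR. rewrite ln_1. unfold Rdiv; rewrite Rmult_0_l, Rplus_0_r.
    destruct (Rle_dec u 0); destruct (Rlt_dec 0 u); try lra. rewrite Rmult_0_r, Rminus_diag, Rabs_R0; lra.
    destruct (Rle_dec 1 u). rewrite Rmult_1_r, Rminus_diag, Rabs_R0; lra. rewrite Rmult_1_l. apply Rabs_le; lra. }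
  pose proof (Nat.div_mod N 2 ltac:(lia)) as Hd. pose proof (Nat.mod_upper_bound N 2 ltac:(lia)) as Hm.
  set (M := (N / 2)%nat) in *. set (r := (N mod 2)%nat) in *.
  assert (r = O \/ r = 1%nat) as [Hr|Hr] by lia; rewrite Hr in Hd.
  - assert (HM : N = (2 * M)%nat) by lia.
    apply (vdc_count_merge M M N); try lia. rewrite HM. apply vdc_count_even. apply IH; lia. apply IH; lia.
  - assert (HM : N = (2 * M + 1)%nat) by lia.
    apply (vdc_count_merge (M + 1) M N); try lia. rewrite HM. apply vdc_count_odd. apply IH; lia. apply IH; lia.
Qed.

Definition vdc_const := / ln 2 + / (2 * ln (3 / 2)).

Lemma ln2_pos : 0 < ln 2.
Proof. rewrite <- ln_1. apply ln_increasing; lra.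
Qed.

Lemma vdc_disc N u : (2 <= N)%nat -> 0 <= u <= 1 ->
  Rabs (u - count_below (fun i => vdc (pred i)) N u / INR N) <= vdc_const * ln (INR N) / INR N.
Proof. intros HN Hu. rewrite count_below_vdc. assert (HNR : 2 <= INR N) by (apply (le_INR 2); auto).
  pose proof (vdc_count_disc N ltac:(lia) u) as H.
  assert (Hc : INR N * clamp01 u = INR N * u). { unfold clamp01. destruct (Rle_dec u 0). assert (u = 0) by lra. subst; ring.
    destruct (Rle_dec 1 u). assert (u = 1) by lra. subst; ring. auto. }
  rewrite Hc in H.
  assert (Hl : ln 2 <= ln (INR N)). { destruct (Req_dec (INR N) 2) as [E|E]. rewrite E; lra. apply Rlt_le, ln_increasing; lra. }
  pose proof ln2_pos. pose proof ln32_pos.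
  assert (vdc_bound N <= vdc_const * ln (INR N)).
  { unfold vdc_bound, vdc_const. rewrite Rmult_plus_distr_r. unfold Rdiv. rewrite (Rmult_comm (/ (2 * ln (3/2)))).
    apply Rplus_le_compat_r. apply Rmult_le_reg_l with (ln 2); auto. rewrite <- Rmult_assoc, Rinv_r; lra. }
  replace (u - vdc_count N u / INR N) with (- (vdc_count N u - INR N * u) / INR N) by (field; lra).
  unfold Rdiv. rewrite Rabs_mult, Rabs_Ropp, Rabs_inv, (Rabs_right (INR N)) by lra.
  apply Rmult_le_compat_r. apply Rlt_le, Rinv_0_lt_compat; lra. lra.
Qed.

Lemma exists_points_star_disc_le_inv mu N : (1 <= N)%nat ->
  exists x : nat -> R, (forall i, (1 <= i <= N)%nat -> 0 <= x i <= 1) /\ star_disc mu x N <= 1 / INR N.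
Proof. intros HN. assert (HNr : 1 <= INR N) by (apply (le_INR 1); auto).
  set (y := fun i => (2 * INR i - 1) / (2 * INR N)).
  assert (Hy : forall i, (1 <= i <= N)%nat -> 0 <= y i).
  { intros i Hi. unfold y. apply Rmult_le_pos. assert (1 <= INR i) by (apply (le_INR 1); lia). lra.
    apply Rlt_le, Rinv_0_lt_compat; lra. }
  exists (fun i => quantile mu (y i)). split.
  - intros i Hi. apply quantile_range; auto.
  - apply star_disc_quantile_le; auto.
    + apply Rlt_le, Rmult_lt_0_compat; [lra|apply Rinv_0_lt_compat; lra].
    + intros u Hu. apply midpoint_grid_disc; auto.
Qed.

Lemma vdc_quantile_star_disc_le mu N : (2 <= N)%nat ->
  star_disc mu (fun i => quantile mu (vdc (pred i))) N <= vdc_const * ln (INR N) / INR N.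
Proof. intros HN. assert (HNr : 2 <= INR N) by (apply (le_INR 2); auto).
  apply star_disc_quantile_le; [intros; apply vdc_range| |intros u Hu; apply vdc_disc; auto].
  unfold vdc_const. pose proof ln2_pos. pose proof ln32_pos.
  assert (0 <= ln (INR N)) by (apply ln_INR_nonneg; lia).
  apply Rmult_le_pos; [|apply Rlt_le, Rinv_0_lt_compat; lra].
  apply Rmult_le_pos; auto. apply Rplus_le_le_0_compat; apply Rlt_le, Rinv_0_lt_compat; lra.
Qed.

(** * Schmidt's lower bound by Halasz's Riesz products *)

Definition pow2 k := (2 ^ k)%nat.
Lemma pow2_S k : pow2 (S k) = (2 * pow2 k)%nat. Proof. reflexivity.
Qed.

Lemma pow2_pos k : (0 < pow2 k)%nat. Proof. unfold pow2. apply Nat.neq_0_lt_0, Nat.pow_nonzero. lia.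
Qed.

Lemma pow2_add a b : pow2 (a + b) = (pow2 a * pow2 b)%nat. Proof. unfold pow2. apply Nat.pow_add_r.
Qed.

Lemma div_block q d r : (r < d)%nat -> ((q * d + r) / d = q)%nat.
Proof. intros H. rewrite Nat.div_add_l by lia. rewrite Nat.div_small by auto. lia.
Qed.

(* [+1] on the first half and [-1] on the second half of each time block of length [2^j]. *)
Definition haar_sign j m : R := if Nat.even (m / pow2 (j - 1)) then 1 else -1.

(* [s j M] is the sign attached to the [M]-th time block of scale [j]. *)
Fixpoint riesz (s : nat -> nat -> R) (l m : nat) : R :=
  match l with O => 1 | S l' => riesz s l' m * (1 + / 4 * (s (S l') (m / pow2 (S l'))%nat * haar_sign (S l') m)) end.

Lemma haar_sign_first_half l b r : (r < pow2 l)%nat -> haar_sign (S l) ((2 * b) * pow2 l + r) = 1.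
Proof. intros H. unfold haar_sign. replace (S l - 1)%nat with l by lia. rewrite div_block by auto.
  rewrite Nat.even_even. auto.
Qed.

Lemma haar_sign_second_half l b r : (r < pow2 l)%nat -> haar_sign (S l) ((2 * b + 1) * pow2 l + r) = -1.
Proof. intros H. unfold haar_sign. replace (S l - 1)%nat with l by lia. rewrite div_block by auto.
  rewrite Nat.even_odd. auto.
Qed.

Lemma block_index_first_half l b r : (r < pow2 l)%nat -> (((2 * b) * pow2 l + r) / pow2 (S l) = b)%nat.
Proof. intros H. rewrite pow2_S. replace ((2 * b) * pow2 l + r)%nat with (b * (2 * pow2 l) + r)%nat by lia.
  apply div_block. lia.
Qed.

Lemma block_index_second_half l b r : (r < pow2 l)%nat -> (((2 * b + 1) * pow2 l + r) / pow2 (S l) = b)%nat.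
Proof. intros H. rewrite pow2_S. replace ((2 * b + 1) * pow2 l + r)%nat with (b * (2 * pow2 l) + (pow2 l + r))%nat by lia.
  apply div_block. lia.
Qed.

Lemma block_split_offset (F : nat -> nat -> R) l b :
  sumR (fun r => F r (b * pow2 (S l) + r)%nat) (pow2 (S l)) =
  sumR (fun r => F r ((2 * b) * pow2 l + r)%nat) (pow2 l) + sumR (fun r => F (pow2 l + r)%nat ((2 * b + 1) * pow2 l + r)%nat) (pow2 l).
Proof. rewrite pow2_S. replace (2 * pow2 l)%nat with (pow2 l + pow2 l)%nat by lia. rewrite sumR_add.
  f_equal; apply sumR_ext; intros; f_equal; lia.
Qed.

Lemma block_split (F : nat -> R) l b :
  sumR (fun r => F (b * pow2 (S l) + r)%nat) (pow2 (S l)) =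
  sumR (fun r => F ((2 * b) * pow2 l + r)%nat) (pow2 l) + sumR (fun r => F ((2 * b + 1) * pow2 l + r)%nat) (pow2 l).
Proof. apply (block_split_offset (fun _ => F)).
Qed.

Definition signs_bounded (s : nat -> nat -> R) := forall j M, -1 <= s j M <= 1.

Lemma riesz_nonneg s l m : signs_bounded s -> 0 <= riesz s l m.
Proof. intros Hs. induction l; simpl. lra. apply Rmult_le_pos; auto.
  specialize (Hs (S l) (m / pow2 (S l))%nat). unfold haar_sign. destruct (Nat.even _); nra.
Qed.

Lemma riesz_first_half s l b r : (r < pow2 l)%nat ->
  riesz s (S l) ((2 * b) * pow2 l + r) = riesz s l ((2 * b) * pow2 l + r) * (1 + / 4 * s (S l) b).
Proof. intros H. cbn [riesz]. rewrite block_index_first_half, haar_sign_first_half by auto. f_equal; ring.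
Qed.

Lemma riesz_second_half s l b r : (r < pow2 l)%nat ->
  riesz s (S l) ((2 * b + 1) * pow2 l + r) = riesz s l ((2 * b + 1) * pow2 l + r) * (1 - / 4 * s (S l) b).
Proof. intros H. cbn [riesz]. rewrite block_index_second_half, haar_sign_second_half by auto. f_equal; ring.
Qed.

Lemma riesz_mass s l : forall b, sumR (fun r => riesz s l (b * pow2 l + r)%nat) (pow2 l) = INR (pow2 l).
Proof. induction l; intros b.
  - simpl. lra.
  - rewrite block_split. rewrite (sumR_ext _ (fun r => riesz s l ((2 * b) * pow2 l + r) * (1 + / 4 * s (S l) b))).
    2:{ intros; apply riesz_first_half; auto. }
    rewrite (sumR_ext (fun r => riesz s (S l) ((2 * b + 1) * pow2 l + r)) (fun r => riesz s l ((2 * b + 1) * pow2 l + r) * (1 - / 4 * s (S l) b))).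
    2:{ intros; apply riesz_second_half; auto. }
    rewrite !sumR_scalr, !IHl. rewrite pow2_S, mult_INR. simpl INR. ring.
Qed.

Lemma riesz_moment s l : signs_bounded s -> forall b,
  Rabs (sumR (fun r => INR r * riesz s l (b * pow2 l + r)%nat) (pow2 l) - INR (pow2 l) * (INR (pow2 l) - 1) / 2)
  <= / 4 * INR (pow2 l) ^ 2 / 2.
Proof. intros Hs. induction l; intros b.
  - simpl. apply Rabs_le; lra.
  - set (u := INR (pow2 l)). assert (Hu : INR (pow2 (S l)) = 2 * u) by (unfold u; rewrite pow2_S, mult_INR; simpl; ring).
    rewrite (block_split_offset (fun r m => INR r * riesz s (S l) m)), Hu.
    rewrite (sumR_ext _ (fun r => INR r * riesz s l ((2 * b) * pow2 l + r) * (1 + / 4 * s (S l) b))).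
    2:{ intros. rewrite riesz_first_half; auto. ring. }
    rewrite (sumR_ext (fun r => INR (pow2 l + r) * riesz s (S l) ((2 * b + 1) * pow2 l + r))
      (fun r => (INR r * riesz s l ((2 * b + 1) * pow2 l + r) + u * riesz s l ((2 * b + 1) * pow2 l + r)) * (1 - / 4 * s (S l) b))).
    2:{ intros. rewrite riesz_second_half; auto. rewrite plus_INR. fold u. ring. }
    rewrite !sumR_scalr, sumR_plus, sumR_scal, riesz_mass. fold u.
    set (W1 := sumR (fun r => INR r * riesz s l (2 * b * pow2 l + r)) (pow2 l)) in *.
    set (W2 := sumR (fun r => INR r * riesz s l ((2 * b + 1) * pow2 l + r)) (pow2 l)) in *.
    pose proof (IHl (2 * b)%nat) as H1. pose proof (IHl (2 * b + 1)%nat) as H2. fold u W1 W2 in H1, H2.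
    set (c := s (S l) b). assert (Hc : -1 <= c <= 1) by apply Hs.
    set (I0 := u * (u - 1) / 2) in *.
    clearbody u W1 W2 c. subst I0. replace (W1 * (1 + / 4 * c) + (W2 + u * u) * (1 - / 4 * c) - 2 * u * (2 * u - 1) / 2)
      with ((1 + / 4 * c) * (W1 - u * (u - 1) / 2) + (1 - / 4 * c) * (W2 - u * (u - 1) / 2) - / 4 * c * u ^ 2) by field.
    apply Rabs_le_inv in H1; apply Rabs_le_inv in H2. apply Rabs_le.
    assert (0 <= u ^ 2) by nra. split; nra.
Qed.

(* The grid at depth [n]: times [m < 2^n] and levels [grid_level n p = p 2^-(n+2)], [p < 2^(n+2)].
   At scale [j] a box is a time block [[M 2^j, (M+1) 2^j)] times a level block of [2^(n+1-j)]
   grid steps, so every box has area [1/2].  A box is occupied when a point whose arrival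
   changes the counts inside the box falls into its level range; unoccupied boxes carry the
   level Haar sign [level_sign], occupied ones carry [0]. *)
Definition grid_step n := / INR (pow2 (n + 2)).
Definition grid_level n p := INR p * grid_step n.
Definition level_block n j p := (p / pow2 (n + 1 - j))%nat.
Definition level_sign n j p : R := if Nat.even (p / pow2 (n - j)) then 1 else -1.
Definition box_occupied n (y : nat -> R) j P M : Prop :=
  exists i, (M * pow2 j < i < M * pow2 j + pow2 j)%nat /\
    INR (P * pow2 (n + 1 - j)) * grid_step n <= y i < INR (P * pow2 (n + 1 - j) + pow2 (n + 1 - j)) * grid_step n.
Definition box_sign n y p j M : R := if excluded_middle_informative (box_occupied n y j (level_block n j p) M) then 0 else level_sign n j p.
Definition riesz_grid n y l p m := riesz (box_sign n y p) l m.
Definition haar_grid n y j p m := box_sign n y p j (m / pow2 j)%nat * haar_sign j m.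
Definition local_disc (y : nat -> R) t m := count_below y m t - INR m * t.

Lemma grid_step_pos n : 0 < grid_step n.
Proof. unfold grid_step. apply Rinv_0_lt_compat. apply (lt_INR 0), pow2_pos.
Qed.

Lemma box_sign_bounded n y p : signs_bounded (box_sign n y p).
Proof. intros j M. unfold box_sign, level_sign. destruct (excluded_middle_informative _); [lra|]. destruct (Nat.even _); lra.
Qed.

Lemma riesz_ext s1 s2 l m : (forall j, (1 <= j <= l)%nat -> forall M, s1 j M = s2 j M) -> riesz s1 l m = riesz s2 l m.
Proof. induction l; intros H; simpl; auto. rewrite IHl by (intros; apply H; lia). rewrite H by lia. auto.
Qed.

Lemma riesz_grid_succ n y l p m : riesz_grid n y (S l) p m = riesz_grid n y l p m + / 4 * haar_grid n y (S l) p m * riesz_grid n y l p m.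
Proof. unfold riesz_grid, haar_grid. cbn [riesz]. ring.
Qed.

Lemma riesz_grid_telescope n y l p m : riesz_grid n y l p m - 1 = sumR (fun k => / 4 * haar_grid n y (S k) p m * riesz_grid n y k p m) l.
Proof. induction l; cbn [sumR]. unfold riesz_grid; simpl; ring. rewrite <- IHl, riesz_grid_succ. ring.
Qed.

Lemma count_below_gap (y : nat -> R) base L a b t m' : (m' < L)%nat -> a <= t < b ->
  (forall i, (base < i < base + L)%nat -> ~ (a <= y i < b)) ->
  count_below y (base + m') t = count_below y base t + sumR (fun r => if Rlt_dec (y (base + r + 1)%nat) a then 1 else 0) m'.
Proof. intros Hm Ht Hi. induction m'. rewrite Nat.add_0_r; simpl; ring.
  rewrite Nat.add_succ_r. cbn [count_below sumR]. rewrite IHm' by lia.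
  replace (S (base + m')) with (base + m' + 1)%nat by lia.
  specialize (Hi (base + m' + 1)%nat ltac:(lia)).
  destruct (Rlt_dec (y (base + m' + 1)%nat) t), (Rlt_dec (y (base + m' + 1)%nat) a); try lra; exfalso; apply Hi; lra.
Qed.

Lemma sumR_sumR_split (a1 b1 a2 b2 a3 b3 : nat -> R) A B :
  sumR (fun i => sumR (fun j => a1 i * b1 j + a2 i * b2 j - a3 i * b3 j) B) A =
  sumR a1 A * sumR b1 B + sumR a2 A * sumR b2 B - sumR a3 A * sumR b3 B.
Proof. rewrite <- !sumR_prod. rewrite <- sumR_plus, <- sumR_minus. apply sumR_ext; intros.
  rewrite <- sumR_plus, <- sumR_minus. auto.
Qed.

Lemma level_sign_block_sum n j d P : (n - j = d)%nat ->
  sumR (fun p' => level_sign n j (P * pow2 (S d) + p')) (pow2 (S d)) = 0.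
Proof. intros Hq. rewrite (block_split (level_sign n j) d P).
  rewrite (sumR_ext _ (fun _ => 1)), (sumR_ext (fun r => level_sign n j ((2 * P + 1) * pow2 d + r)) (fun _ => -1)).
  - rewrite !sumR_const. ring.
  - intros. unfold level_sign. rewrite Hq, div_block, Nat.even_odd by auto. auto.
  - intros. unfold level_sign. rewrite Hq, div_block, Nat.even_even by auto. auto.
Qed.

Lemma grid_level_sign_block_sum n j d P : (n - j = d)%nat ->
  sumR (fun p' => grid_level n (P * pow2 (S d) + p') * level_sign n j (P * pow2 (S d) + p')) (pow2 (S d))
  = - (INR (pow2 d) ^ 2 * grid_step n).
Proof. intros Hq.
  rewrite (block_split (fun p => grid_level n p * level_sign n j p) d P), <- sumR_plus.
  rewrite (sumR_ext _ (fun _ => - (INR (pow2 d) * grid_step n))).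
  - rewrite sumR_const. ring.
  - intros r Hr. unfold level_sign. rewrite Hq, !div_block, Nat.even_odd, Nat.even_even by auto. unfold grid_level.
    repeat rewrite ?plus_INR, ?mult_INR. simpl INR. ring.
Qed.

Lemma haar_riesz_block_sum s k M :
  sumR (fun m' => haar_sign (S k) (M * pow2 (S k) + m') * riesz s k (M * pow2 (S k) + m')) (pow2 (S k)) = 0.
Proof. rewrite (block_split (fun m => haar_sign (S k) m * riesz s k m) k M).
  rewrite (sumR_ext _ (fun r => riesz s k (2 * M * pow2 k + r)%nat)) by (intros; rewrite haar_sign_first_half by auto; ring).
  rewrite (sumR_ext (fun r => haar_sign (S k) ((2 * M + 1) * pow2 k + r) * riesz s k ((2 * M + 1) * pow2 k + r)%nat)
     (fun r => -1 * riesz s k ((2 * M + 1) * pow2 k + r)%nat)) by (intros; rewrite haar_sign_second_half by auto; ring).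
  rewrite (sumR_scal (-1)), !riesz_mass. ring.
Qed.

(* The Riesz weights are close enough to uniform (by [riesz_moment]) that the time Haar
   coefficient of [m] keeps the sign it has for the uniform weight, [-(pow2 k)^2]. *)
Lemma haar_time_riesz_block_le s k M : signs_bounded s ->
  sumR (fun m' => INR (M * pow2 (S k) + m') * haar_sign (S k) (M * pow2 (S k) + m') * riesz s k (M * pow2 (S k) + m'))
    (pow2 (S k)) <= - (3/4) * INR (pow2 k) ^ 2.
Proof. intros Hs. rewrite (block_split (fun m => INR m * haar_sign (S k) m * riesz s k m) k M).
  rewrite (sumR_ext _ (fun r => INR (2 * M * pow2 k) * riesz s k (2 * M * pow2 k + r)%nat + INR r * riesz s k (2 * M * pow2 k + r)%nat))
    by (intros; rewrite haar_sign_first_half, plus_INR by auto; ring).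
  rewrite (sumR_ext (fun r => INR ((2 * M + 1) * pow2 k + r) * haar_sign (S k) ((2 * M + 1) * pow2 k + r) * riesz s k ((2 * M + 1) * pow2 k + r)%nat)
     (fun r => -1 * (INR ((2 * M + 1) * pow2 k) * riesz s k ((2 * M + 1) * pow2 k + r)%nat + INR r * riesz s k ((2 * M + 1) * pow2 k + r)%nat)))
    by (intros; rewrite haar_sign_second_half, plus_INR by auto; ring).
  rewrite sumR_scal, !sumR_plus, !sumR_scal, !riesz_mass.
  pose proof (riesz_moment s k Hs (2 * M)) as H1. pose proof (riesz_moment s k Hs (2 * M + 1)) as H2.
  apply Rabs_le_inv in H1. apply Rabs_le_inv in H2.
  repeat rewrite ?plus_INR, ?mult_INR. simpl INR. nra.
Qed.

Lemma div_pow2_block P a b p' : (p' < pow2 a)%nat ->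
  ((P * pow2 a + p') / pow2 (a + b) = (P * pow2 a) / pow2 (a + b))%nat.
Proof. intros Hp. rewrite pow2_add.
  rewrite <- !Nat.Div0.div_div by (pose proof (pow2_pos a); pose proof (pow2_pos b); lia).
  rewrite div_block by auto. rewrite <- (Nat.add_0_r (P * pow2 a)), div_block by apply pow2_pos. auto.
Qed.

(* Up to scale [k] the Riesz product only sees level blocks of at least [2^(d+1)] grid steps. *)
Lemma riesz_grid_level_block k d y P p' m : (p' < pow2 (S d))%nat ->
  riesz_grid (S k + d) y k (P * pow2 (S d) + p') m = riesz_grid (S k + d) y k (P * pow2 (S d)) m.
Proof. intros Hp. unfold riesz_grid. apply riesz_ext. intros j Hj M'. unfold box_sign, level_block, level_sign.
  replace (S k + d + 1 - j)%nat with (S d + (S k - j))%nat by lia.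
  replace (S k + d - j)%nat with (S d + (k - j))%nat by lia.
  rewrite !div_pow2_block by auto. auto.
Qed.

Definition occupied n y j P M : R := if excluded_middle_informative (box_occupied n y j P M) then 1 else 0.

(* On an unoccupied box the count is independent of the level, so only the term [- m t]
   of the local discrepancy survives the level Haar sign, and it has a definite sign. *)
Lemma haar_coef_box k d y P M :
  sumR (fun p' => sumR (fun m' =>
     local_disc y (grid_level (S k + d) (P * pow2 (S d) + p')) (M * pow2 (S k) + m') *
     haar_grid (S k + d) y (S k) (P * pow2 (S d) + p') (M * pow2 (S k) + m') *
     riesz_grid (S k + d) y k (P * pow2 (S d) + p') (M * pow2 (S k) + m')) (pow2 (S k))) (pow2 (S d))
  <= - (3/4) * grid_step (S k + d) * INR (pow2 d) ^ 2 * INR (pow2 k) ^ 2 * (1 - occupied (S k + d) y (S k) P M).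
Proof.
  set (n := (S k + d)%nat). set (w := pow2 (S d)). set (L := pow2 (S k)).
  assert (Hw : (n + 1 - S k = S d)%nat) by (unfold n; lia).
  assert (Hq : (n - S k = d)%nat) by (unfold n; lia).
  assert (Htb : forall p', (p' < w)%nat -> level_block n (S k) (P * w + p') = P).
  { intros. unfold level_block. rewrite Hw. apply div_block; auto. }
  assert (Hmb : forall m', (m' < L)%nat -> ((M * L + m') / L = M)%nat) by (intros; apply div_block; auto).
  pose proof (grid_step_pos n) as Hstep.
  unfold occupied. destruct (excluded_middle_informative (box_occupied n y (S k) P M)) as [Hocc|Hfree].
  { rewrite (sumR_ext _ (fun _ => 0)), sumR_zero; [lra|].
    intros p' Hp. rewrite (sumR_ext _ (fun _ => 0)); [apply sumR_zero|].
    intros m' Hm. unfold haar_grid, box_sign. rewrite Htb, Hmb by auto.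
    destruct (excluded_middle_informative _); [ring|tauto]. }
  set (a := INR (P * w) * grid_step n). set (b := INR (P * w + w) * grid_step n).
  assert (Hempty : forall i, (M * L < i < M * L + L)%nat -> ~ (a <= y i < b)).
  { intros i Hi Hy. apply Hfree. exists i. unfold a, b in Hy. rewrite Hw. split; auto. }
  set (g := fun m => riesz_grid n y k (P * w) m).
  set (a1 := fun p' => count_below y (M * L) (grid_level n (P * w + p')) * level_sign n (S k) (P * w + p')).
  set (b1 := fun m' => haar_sign (S k) (M * L + m') * g (M * L + m')%nat).
  set (a2 := fun p' => level_sign n (S k) (P * w + p')).
  set (b2 := fun m' => sumR (fun r => if Rlt_dec (y (M * L + r + 1)%nat) a then 1 else 0) m'
                       * haar_sign (S k) (M * L + m') * g (M * L + m')%nat).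
  set (a3 := fun p' => grid_level n (P * w + p') * level_sign n (S k) (P * w + p')).
  set (b3 := fun m' => INR (M * L + m') * haar_sign (S k) (M * L + m') * g (M * L + m')%nat).
  rewrite (sumR_ext _ (fun p' => sumR (fun m' => a1 p' * b1 m' + a2 p' * b2 m' - a3 p' * b3 m') L)).
  2:{ intros p' Hp. apply sumR_ext. intros m' Hm. unfold haar_grid, box_sign. rewrite Htb, Hmb by auto.
      destruct (excluded_middle_informative _) as [Hx|_]; [tauto|].
      rewrite (riesz_grid_level_block k d y P p') by auto.
      unfold local_disc. rewrite (count_below_gap y (M * L) L a b) by (auto; unfold grid_level, a, b; split;
        apply Rmult_le_compat_r || apply Rmult_lt_compat_r; try lra; try (apply le_INR || apply lt_INR); lia).
      unfold a1, b1, a2, b2, a3, b3, g, n, w. ring. }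
  rewrite sumR_sumR_split.
  assert (Hb1 : sumR b1 L = 0) by apply haar_riesz_block_sum.
  assert (Ha2 : sumR a2 w = 0) by (apply level_sign_block_sum; auto).
  assert (Ha3 : sumR a3 w = - (INR (pow2 d) ^ 2 * grid_step n)) by (apply grid_level_sign_block_sum; auto).
  assert (Hb3 : sumR b3 L <= - (3/4) * INR (pow2 k) ^ 2) by (apply haar_time_riesz_block_le, box_sign_bounded).
  rewrite Hb1, Ha2, Ha3.
  assert (0 <= INR (pow2 d) ^ 2 * grid_step n) by (apply Rmult_le_pos; [apply pow2_ge_0|lra]).
  nra.
Qed.

Definition in_level_block n (y : nat -> R) j P i : R :=
  if Rle_dec (INR (P * pow2 (n + 1 - j)) * grid_step n) (y i) then
    if Rlt_dec (y i) (INR (P * pow2 (n + 1 - j) + pow2 (n + 1 - j)) * grid_step n) then 1 else 0 else 0.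

Lemma in_level_block_nonneg n y j P i : 0 <= in_level_block n y j P i.
Proof. unfold in_level_block. destruct (Rle_dec _ _); [destruct (Rlt_dec _ _)|]; lra.
Qed.

Lemma in_level_block_sum n y j i A : sumR (fun P => in_level_block n y j P i) A <= 1.
Proof.
  set (h := INR (pow2 (n + 1 - j)) * grid_step n). set (z := y i).
  assert (Hh : 0 < h) by (unfold h; apply Rmult_lt_0_compat; [apply (lt_INR 0), pow2_pos|apply grid_step_pos]).
  assert (HJ : forall P, in_level_block n y j P i = if Rle_dec (INR P * h) z then if Rlt_dec z (INR P * h + h) then 1 else 0 else 0).
  { intros P. unfold in_level_block, h, z. rewrite plus_INR, mult_INR.
    replace ((INR P * INR (pow2 (n + 1 - j)) + INR (pow2 (n + 1 - j))) * grid_step n) with (INR P * (INR (pow2 (n + 1 - j)) * grid_step n) + INR (pow2 (n + 1 - j)) * grid_step n) by ring.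
    rewrite Rmult_assoc. auto. }
  assert (forall A, sumR (fun P => in_level_block n y j P i) A <= 1 /\ (sumR (fun P => in_level_block n y j P i) A = 0 \/ z < INR A * h)).
  { clear A. intros A. induction A as [|A [IH1 IH2]]. simpl; lra. cbn [sumR]. rewrite HJ, S_INR.
    destruct (Rle_dec (INR A * h) z); [destruct (Rlt_dec z (INR A * h + h))|].
    - destruct IH2 as [IH2|IH2]; [|lra]. rewrite IH2. lra.
    - split; [lra|]. destruct IH2; [left; lra|right; lra].
    - split; [lra|]. destruct IH2; [left; lra|right; lra]. }
  apply (H A).
Qed.

Lemma occupied_le n y j P M : occupied n y j P M <= sumR (fun r => in_level_block n y j P (M * pow2 j + r)%nat) (pow2 j).
Proof. unfold occupied. destruct (excluded_middle_informative _) as [[i [Hi Hy]]|].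
  - replace 1 with (in_level_block n y j P (M * pow2 j + (i - M * pow2 j))%nat).
    apply (sumR_ge_term (fun r => in_level_block n y j P (M * pow2 j + r)%nat)). lia. intros; apply in_level_block_nonneg.
    unfold in_level_block. replace (M * pow2 j + (i - M * pow2 j))%nat with i by lia.
    destruct (Rle_dec _ _); [destruct (Rlt_dec _ _)|]; lra.
  - apply sumR_nonneg; intros; apply in_level_block_nonneg.
Qed.

Lemma occupied_count n y j A B : sumR (fun P => sumR (fun M => occupied n y j P M) B) A <= INR (B * pow2 j).
Proof.
  apply Rle_trans with (sumR (fun P => sumR (fun M => sumR (fun r => in_level_block n y j P (M * pow2 j + r)%nat) (pow2 j)) B) A).
  { apply sumR_le; intros; apply sumR_le; intros; apply occupied_le. }
  rewrite sumR_swap. rewrite mult_INR, <- sumR_const.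
  apply sumR_le; intros M _. rewrite sumR_swap. rewrite <- (Rmult_1_r (INR (pow2 j))), <- sumR_const.
  apply sumR_le; intros r _. apply in_level_block_sum.
Qed.

Lemma haar_coef_level n y k : (S k <= n)%nat ->
  sumR (fun p => sumR (fun m => local_disc y (grid_level n p) m * haar_grid n y (S k) p m * riesz_grid n y k p m) (pow2 n)) (pow2 (n + 2))
  <= - (3/4) * grid_step n * INR (pow2 (n - 1)) ^ 2 * INR (pow2 n).
Proof. intros Hk. destruct (Nat.le_exists_sub (S k) n Hk) as [d [Hd _]]. rewrite Nat.add_comm in Hd. subst n.
  replace (S k + d + 2)%nat with (S (S k) + S d)%nat by lia. rewrite (pow2_add (S (S k)) (S d)), sumR_block.
  rewrite (sumR_ext _ (fun P => sumR (fun M => sumR (fun p' => sumR (fun m' =>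
     local_disc y (grid_level (S k + d) (P * pow2 (S d) + p')) (M * pow2 (S k) + m') *
     haar_grid (S k + d) y (S k) (P * pow2 (S d) + p') (M * pow2 (S k) + m') *
     riesz_grid (S k + d) y k (P * pow2 (S d) + p') (M * pow2 (S k) + m')) (pow2 (S k))) (pow2 (S d))) (pow2 d))).
  2:{ intros P _. etransitivity; [|apply sumR_swap]. apply sumR_ext. intros p' _.
      replace (pow2 (S k + d)) with (pow2 d * pow2 (S k))%nat by (rewrite <- pow2_add; f_equal; lia). apply sumR_block. }
  set (c := (3/4) * grid_step (S k + d) * INR (pow2 d) ^ 2 * INR (pow2 k) ^ 2).
  apply Rle_trans with (sumR (fun P => sumR (fun M => - c * (1 - occupied (S k + d) y (S k) P M)) (pow2 d)) (pow2 (S (S k)))).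
  { apply sumR_le; intros; apply sumR_le; intros. eapply Rle_trans; [apply haar_coef_box|]. right; unfold c; ring. }
  rewrite (sumR_ext _ (fun P => sumR (fun M => - c + c * occupied (S k + d) y (S k) P M) (pow2 d))).
  2:{ intros; apply sumR_ext; intros; ring. }
  rewrite (sumR_ext _ (fun P => INR (pow2 d) * (- c) + c * sumR (fun M => occupied (S k + d) y (S k) P M) (pow2 d))).
  2:{ intros. rewrite sumR_plus, sumR_const, sumR_scal. auto. }
  rewrite sumR_plus, sumR_const, sumR_scal.
  pose proof (occupied_count (S k + d) y (S k) (pow2 (S (S k))) (pow2 d)) as Hc.
  assert (Hc0 : 0 <= c). { unfold c. pose proof (grid_step_pos (S k + d)).
    apply Rmult_le_pos; [apply Rmult_le_pos; [apply Rmult_le_pos|]|]; try lra; apply pow2_ge_0. }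
  assert (E1 : INR (pow2 d * pow2 (S k)) = INR (pow2 (S k + d))) by (f_equal; rewrite <- pow2_add; f_equal; lia).
  assert (E2 : INR (pow2 (S (S k))) * INR (pow2 d) = 2 * INR (pow2 (S k + d))).
  { rewrite <- mult_INR. replace (pow2 (S (S k)) * pow2 d)%nat with (2 * pow2 (S k + d))%nat. rewrite mult_INR; auto.
    rewrite (pow2_S (S k)), pow2_add. lia. }
  assert (E3 : INR (pow2 (S k + d - 1)) = INR (pow2 d) * INR (pow2 k)).
  { rewrite <- mult_INR, <- pow2_add. f_equal. f_equal. lia. }
  rewrite E1 in Hc. rewrite E3.
  replace (- (3 / 4) * grid_step (S k + d) * (INR (pow2 d) * INR (pow2 k)) ^ 2 * INR (pow2 (S k + d))) with
    (- c * INR (pow2 (S k + d))) by (unfold c; ring).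
  replace (INR (pow2 (S (S k))) * (INR (pow2 d) * - c)) with (- c * (INR (pow2 (S (S k))) * INR (pow2 d))) by ring.
  rewrite E2. apply Rmult_le_compat_l with (r := c) in Hc; auto. lra.
Qed.

Lemma INR_pow2_pred n : (1 <= n)%nat ->
  INR (pow2 n) = 2 * INR (pow2 (n - 1)) /\ INR (pow2 (n + 2)) = 8 * INR (pow2 (n - 1)).
Proof. intros Hn. replace n with (S (n - 1)) at 1 3 by lia. replace (S (n - 1) + 2)%nat with (S (S (S (n - 1)))) by lia.
  rewrite !pow2_S, !mult_INR. simpl INR. split; ring.
Qed.

Definition riesz_test n y : R :=
  sumR (fun p => sumR (fun m => local_disc y (grid_level n p) m * (riesz_grid n y n p m - 1)) (pow2 n)) (pow2 (n + 2)).

Lemma riesz_test_le n y : (1 <= n)%nat -> riesz_test n y <= - (3/64) * INR n * INR (pow2 (n - 1)) ^ 2.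
Proof. intros Hn.
  assert (Hsplit : riesz_test n y = sumR (fun k => / 4 * sumR (fun p => sumR (fun m =>
      local_disc y (grid_level n p) m * haar_grid n y (S k) p m * riesz_grid n y k p m) (pow2 n)) (pow2 (n + 2))) n).
  { unfold riesz_test.
    rewrite (sumR_ext _ (fun p => sumR (fun k => sumR (fun m =>
      / 4 * (local_disc y (grid_level n p) m * haar_grid n y (S k) p m * riesz_grid n y k p m)) (pow2 n)) n)).
    - rewrite sumR_swap. apply sumR_ext; intros k _. rewrite <- sumR_scal.
      apply sumR_ext; intros. rewrite <- sumR_scal. auto.
    - intros p _. rewrite <- sumR_swap. apply sumR_ext; intros m _.
      rewrite riesz_grid_telescope, <- sumR_scal. apply sumR_ext; intros. ring. }
  set (N1 := INR (pow2 (n - 1))).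
  destruct (INR_pow2_pred n Hn) as [EN EN2]. fold N1 in EN, EN2.
  assert (HN1 : 0 < N1) by (apply (lt_INR 0), pow2_pos).
  rewrite Hsplit. apply Rle_trans with (sumR (fun k => / 4 * (- (3/4) * grid_step n * N1 ^ 2 * INR (pow2 n))) n).
  - apply sumR_le; intros k Hk. apply Rmult_le_compat_l; [lra|]. apply haar_coef_level; lia.
  - rewrite sumR_const. unfold grid_step. rewrite EN, EN2. field_simplify; lra.
Qed.

(* The Riesz product is nonnegative with mean one on every time row ([riesz_mass]). *)
Lemma riesz_test_abs_le n y B :
  (forall p m, (p < pow2 (n + 2))%nat -> (m < pow2 n)%nat -> Rabs (local_disc y (grid_level n p) m) <= B) ->
  Rabs (riesz_test n y) <= B * (2 * INR (pow2 n) * INR (pow2 (n + 2))).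
Proof. intros HB. unfold riesz_test. eapply Rle_trans; [apply sumR_abs|].
  apply Rle_trans with (sumR (fun p => B * (2 * INR (pow2 n))) (pow2 (n + 2))).
  2:{ rewrite sumR_const. right; ring. }
  apply sumR_le; intros p Hp. eapply Rle_trans; [apply sumR_abs|].
  apply Rle_trans with (sumR (fun m => B * (riesz_grid n y n p m + 1)) (pow2 n)).
  - apply sumR_le; intros m Hm. rewrite Rabs_mult. pose proof (HB p m Hp Hm).
    pose proof (riesz_nonneg (box_sign n y p) n m (box_sign_bounded n y p)). fold (riesz_grid n y n p m) in H0.
    assert (Rabs (riesz_grid n y n p m - 1) <= riesz_grid n y n p m + 1) by (apply Rabs_le; lra).
    apply Rmult_le_compat; try apply Rabs_pos; lra.
  - rewrite sumR_scal, sumR_plus, sumR_const.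
    pose proof (riesz_mass (box_sign n y p) n 0) as HM. change (sumR (riesz_grid n y n p) (pow2 n) = INR (pow2 n)) in HM.
    rewrite HM. right; ring.
Qed.

Lemma large_local_disc n y : (1 <= n)%nat -> exists p m, (p < pow2 (n + 2))%nat /\ (m < pow2 n)%nat /\
  INR n / 1024 <= Rabs (local_disc y (grid_level n p) m).
Proof. intros Hn. apply NNPP. intros Hno.
  assert (Hall : forall p m, (p < pow2 (n + 2))%nat -> (m < pow2 n)%nat ->
    Rabs (local_disc y (grid_level n p) m) <= INR n / 1024).
  { intros p m Hp Hm. apply Rlt_le, Rnot_le_lt. intros H. apply Hno. exists p, m. auto. }
  pose proof (riesz_test_le n y Hn) as Hup. pose proof (riesz_test_abs_le n y _ Hall) as Hlow.
  set (N1 := INR (pow2 (n - 1))) in *.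
  destruct (INR_pow2_pred n Hn) as [EN EN2]. fold N1 in EN, EN2.
  assert (HN1 : 0 < N1) by (apply (lt_INR 0), pow2_pos).
  assert (Hnr : 1 <= INR n) by (apply (le_INR 1); auto).
  rewrite EN, EN2 in Hlow. apply Rabs_le_inv in Hlow.
  assert (0 < INR n * N1 ^ 2) by (apply Rmult_lt_0_compat; [lra| apply pow_lt; lra]).
  nra.
Qed.

(** * Lower bounds for atomless measures *)

Lemma abs_cdf_sub_empirical_le1 mu x N b : (1 <= N)%nat -> Rabs (pm mu (fun y => 0 <= y < b) - empirical x N b) <= 1.
Proof. intros HN. pose proof (cdf_range mu b) as HG. unfold cdf in HG. unfold empirical.
  pose proof (count_below_range x N b). assert (1 <= INR N) by (apply (le_INR 1); auto).
  assert (0 <= count_below x N b / INR N <= 1). { split. apply Rmult_le_pos; [lra|]. apply Rlt_le, Rinv_0_lt_compat; lra.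
    apply Rmult_le_reg_r with (INR N); [lra|]. unfold Rdiv; rewrite Rmult_assoc, Rinv_l; lra. }
  apply Rabs_le; lra.
Qed.

Lemma star_disc_set_bounded mu x N : (1 <= N)%nat -> exists M, forall r, (fun r => exists b, 0 <= b <= 1 /\
          r = Rabs (pm mu (fun y => 0 <= y < b) - empirical x N b)) r -> r <= M.
Proof. intros HN. exists 1. intros r [b [_ ->]]. apply abs_cdf_sub_empirical_le1; auto.
Qed.

Lemma star_disc_ge mu x N b r : (1 <= N)%nat -> 0 <= b <= 1 ->
  r <= Rabs (cdf mu b - count_below x N b / INR N) -> r <= star_disc mu x N.
Proof. intros HN Hb H. eapply Rle_trans; [apply H|]. unfold star_disc. apply sup_R_ge.
  exists b; split; auto. apply star_disc_set_bounded; auto.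
Qed.

Lemma star_disc_le1 mu x N : (1 <= N)%nat -> star_disc mu x N <= 1.
Proof. intros HN. unfold star_disc. apply sup_R_le. lra. intros r [b [_ ->]]. apply abs_cdf_sub_empirical_le1; auto.
Qed.

Lemma exists_min_index (x : nat -> R) N : (1 <= N)%nat -> exists i0, (1 <= i0 <= N)%nat /\ forall i, (1 <= i <= N)%nat -> x i0 <= x i.
Proof. induction N; intros HN; [lia|]. destruct (Nat.eq_dec N 0) as [->|HN0].
  exists 1%nat. split; [lia|]. intros i Hi. assert (i = 1%nat) by lia. subst; lra.
  destruct IHN as [i0 [Hi0 Hm]]; [lia|]. destruct (Rle_dec (x i0) (x (S N))).
  - exists i0. split; [lia|]. intros i Hi. destruct (Nat.eq_dec i (S N)). subst; auto. apply Hm; lia.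
  - exists (S N). split; [lia|]. intros i Hi. destruct (Nat.eq_dec i (S N)). subst; lra. specialize (Hm i ltac:(lia)); lra.
Qed.

Lemma count_below_zero (x : nat -> R) N b : (forall i, (1 <= i <= N)%nat -> ~ x i < b) -> count_below x N b = 0.
Proof. induction N; intros H; simpl; auto. rewrite IHN by (intros; apply H; lia).
  destruct (Rlt_dec _ _) as [h|]; [exfalso; apply (H (S N)); auto; lia|lra].
Qed.

Lemma count_below_pos (x : nat -> R) N b i0 : (1 <= i0 <= N)%nat -> x i0 < b -> 1 <= count_below x N b.
Proof. induction N; intros Hi Hx; [lia|]. cbn [count_below]. destruct (Nat.eq_dec i0 (S N)).
  - subst. destruct (Rlt_dec _ _); [|tauto]. pose proof (count_below_range x N b). lra.
  - assert (1 <= count_below x N b) by (apply IHN; auto; lia). destruct (Rlt_dec _ _); lra.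
Qed.

Lemma inv_succ_antimono k k' : (k <= k')%nat -> / (INR k' + 1) <= / (INR k + 1).
Proof. intros H. apply Rinv_le_contravar. pose proof (pos_INR k); lra. apply le_INR in H; lra.
Qed.

Lemma star_disc_ge_half_inv mu N x : no_atoms mu -> (1 <= N)%nat -> (forall i, (1 <= i <= N)%nat -> 0 <= x i <= 1) ->
  star_disc mu x N >= 1 / (2 * INR N).
Proof. intros Hna HN Hx. apply Rle_ge. assert (HNr : 1 <= INR N) by (apply (le_INR 1); auto).
  destruct (exists_min_index x N HN) as [i0 [Hi0 Hm]]. set (z := x i0). pose proof (Hx i0 Hi0) as Hz. fold z in Hz.
  assert (Hc0 : count_below x N z = 0) by (apply count_below_zero; intros i Hi; specialize (Hm i Hi); unfold z; lra).
  destruct (Rle_dec (1 / (2 * INR N)) (cdf mu z)) as [Hg|Hg].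
  { apply (star_disc_ge mu x N z); auto. rewrite Hc0. unfold Rdiv at 2. rewrite Rmult_0_l, Rminus_0_r.
    pose proof (cdf_range mu z). rewrite Rabs_right; lra. }
  assert (Hz1 : z < 1). { destruct (Req_dec z 1) as [E|E]; [|lra]. exfalso. rewrite E, cdf_1, (Hna 1) in Hg by lra.
    apply Hg. unfold Rdiv. rewrite Rmult_1_l. apply Rle_trans with (/ 2); [apply Rinv_le_contravar; lra | lra]. }
  pose proof (cdf_right_limit mu z ltac:(lra)) as Hr. rewrite (Hna z Hz), Rplus_0_r in Hr.
  destruct (Hr (1 / (2 * INR N) - cdf mu z)) as [K1 HK1]; [lra|].
  destruct (exists_inv_succ_lt (1 - z)) as [K2 HK2]; [lra|].
  set (k := max K1 K2). specialize (HK1 k ltac:(unfold k; lia)). unfold Rdist in HK1. apply Rabs_def2 in HK1.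
  pose proof (inv_succ_antimono K2 k ltac:(unfold k; lia)). pose proof (inv_succ_pos k).
  set (b := z + / (INR k + 1)).
  apply (star_disc_ge mu x N b); auto. unfold b; lra.
  assert (1 <= count_below x N b) by (apply (count_below_pos x N b i0); auto; unfold b, z; lra).
  assert (/ INR N <= count_below x N b / INR N). { unfold Rdiv. rewrite <- (Rmult_1_l (/ INR N)) at 1.
    apply Rmult_le_compat_r; auto. apply Rlt_le, Rinv_0_lt_compat; lra. }
  assert (1 / (2 * INR N) = / INR N / 2) by (field; lra).
  assert (0 < / INR N) by (apply Rinv_0_lt_compat; lra).
  fold b in HK1. rewrite Rabs_minus_sym, Rabs_right; lra.
Qed.

Lemma exists_gap_below (y : nat -> R) m t : exists eta, 0 < eta /\ forall i, (1 <= i <= m)%nat -> ~ (t - eta <= y i < t).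
Proof. induction m. exists 1. split; [lra|]. intros; lia.
  destruct IHm as [e1 [He1 H1]].
  destruct (Rlt_dec (y (S m)) t) as [Hy|Hy].
  - exists (Rmin e1 ((t - y (S m)) / 2)). split. apply Rmin_glb_lt; lra.
    intros i Hi. pose proof (Rmin_l e1 ((t - y (S m)) / 2)). pose proof (Rmin_r e1 ((t - y (S m)) / 2)).
    destruct (Nat.eq_dec i (S m)). subst. lra. specialize (H1 i ltac:(lia)). lra.
  - exists e1. split; auto. intros i Hi. destruct (Nat.eq_dec i (S m)). subst. lra. apply H1; lia.
Qed.

Lemma ln2_lt1 : ln 2 < 1.
Proof. rewrite <- (ln_exp 1). apply ln_increasing. lra. pose proof (exp_ineq1 1 ltac:(lra)). lra.
Qed.

Lemma grid_level_range n p : (p < pow2 (n + 2))%nat -> 0 <= grid_level n p < 1.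
Proof. intros Hp. unfold grid_level, grid_step. pose proof (pow2_pos (n + 2)) as Hpos.
  assert (0 < INR (pow2 (n + 2))) by (apply (lt_INR 0); auto).
  assert (INR p < INR (pow2 (n + 2))) by (apply lt_INR; auto).
  split.
  - apply Rmult_le_pos; [apply pos_INR|apply Rlt_le, Rinv_0_lt_compat; auto].
  - apply Rmult_lt_reg_r with (INR (pow2 (n + 2))); auto.
    rewrite Rmult_assoc, Rinv_l, Rmult_1_r, Rmult_1_l; lra.
Qed.

Lemma ln_lt_of_lt_pow2 m n : (1 <= m)%nat -> (m < pow2 n)%nat -> ln (INR m) < INR n.
Proof. intros Hm Hmn. apply Rlt_le_trans with (INR n * ln 2).
  - rewrite <- ln_pow by lra. apply ln_increasing. apply (lt_INR 0); lia.
    rewrite <- (pow_INR 2). apply lt_INR; auto.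
  - pose proof ln2_lt1. pose proof ln2_pos. pose proof (pos_INR n). nra.
Qed.

(* Levels [t] avoided by the [F(x_i)] are attained by [F], so a large local discrepancy of the
   transformed points at level [t] is seen by the star discrepancy at a nearby test point. *)
Lemma star_disc_ge_local_disc mu x m t e : no_atoms mu -> (1 <= m)%nat -> 0 < t < 1 -> 0 < e ->
  Rabs (local_disc (fun i => cdf mu (x i)) t m) / INR m - e <= star_disc mu x m.
Proof. intros Hna Hm Ht He. set (y := fun i => cdf mu (x i)).
  assert (HmR : 1 <= INR m) by (apply (le_INR 1); auto).
  destruct (exists_gap_below y m t) as [eta [Heta Hgap]].
  set (e' := Rmin eta (Rmin t e) / 2).
  assert (He' : 0 < e' < eta /\ e' < t /\ e' <= e).
  { unfold e'. pose proof (Rmin_l eta (Rmin t e)). pose proof (Rmin_r eta (Rmin t e)).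
    pose proof (Rmin_l t e). pose proof (Rmin_r t e).
    assert (0 < Rmin eta (Rmin t e)) by (repeat apply Rmin_glb_lt; lra). lra. }
  destruct (cdf_onto mu Hna (t - e') ltac:(lra)) as [b [Hb HFb]].
  assert (Hcount : count_below x m b = count_below y m t).
  { apply count_below_ext2. intros i Hi. specialize (Hgap i Hi). unfold y in *. split; intros H.
    - pose proof (cdf_mono mu (x i) b ltac:(lra)). lra.
    - destruct (Rlt_le_dec (x i) b); auto. pose proof (cdf_mono mu b (x i) r). lra. }
  apply (star_disc_ge mu x m b); auto. rewrite Hcount, HFb.
  set (E := local_disc y t m).
  replace (t - e' - count_below y m t / INR m) with (- (E + INR m * e') / INR m) by (unfold E, local_disc; field; lra).
  unfold Rdiv. rewrite Rabs_mult, Rabs_Ropp, Rabs_inv, (Rabs_right (INR m)) by lra.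
  pose proof (Rabs_triang_inv E (- (INR m * e'))) as Htri.
  replace (E - - (INR m * e')) with (E + INR m * e') in Htri by ring.
  rewrite Rabs_Ropp, (Rabs_right (INR m * e')) in Htri by nra.
  assert (Hinv : INR m * / INR m = 1) by (field; lra).
  assert (0 < / INR m) by (apply Rinv_0_lt_compat; lra).
  nra.
Qed.

Lemma star_disc_log_infinitely_often mu x : no_atoms mu ->
  forall M0 : nat, exists N : nat, (M0 <= N)%nat /\ (1 <= N)%nat /\ star_disc mu x N >= / 2048 * ln (INR N) / INR N.
Proof. intros Hna M0.
  set (n := (2048 * M0 + 1)%nat).
  assert (Hnr : INR n = 2048 * INR M0 + 1) by (unfold n; rewrite plus_INR, mult_INR; simpl; ring).
  set (y := fun i => cdf mu (x i)).
  destruct (large_local_disc n y ltac:(unfold n; lia)) as [p [m [Hp [Hm HE]]]].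
  pose proof (grid_level_range n p Hp) as Ht. set (t := grid_level n p) in *.
  assert (HM0 : 0 <= INR M0) by apply pos_INR.
  assert (Hm1 : (1 <= m)%nat).
  { destruct m; [|lia]. exfalso. unfold local_disc in HE. simpl in HE.
    replace (0 - 0 * t) with 0 in HE by ring. rewrite Rabs_R0 in HE. lra. }
  assert (HmR : 1 <= INR m) by (apply (le_INR 1); auto).
  assert (Ht0 : 0 < t).
  { destruct (Req_dec t 0) as [E|E]; [|lra]. exfalso. unfold local_disc in HE. rewrite E in HE.
    rewrite count_below_zero in HE. replace (0 - INR m * 0) with 0 in HE by ring. rewrite Rabs_R0 in HE. lra.
    intros i Hi. unfold y. pose proof (cdf_range mu (x i)). lra. }
  assert (Hd : INR n / 2048 / INR m <= star_disc mu x m).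
  { assert (0 < INR n / 2048 / INR m) by (apply Rdiv_lt_0_compat; lra).
    pose proof (star_disc_ge_local_disc mu x m t (INR n / 2048 / INR m) Hna Hm1 ltac:(lra) H).
    fold y in H0. assert (INR n / 1024 / INR m <= Rabs (local_disc y t m) / INR m).
    { unfold Rdiv. apply Rmult_le_compat_r; [apply Rlt_le, Rinv_0_lt_compat; lra|lra]. }
    replace (INR n / 2048 / INR m) with (INR n / 1024 / INR m - INR n / 2048 / INR m) by (field; lra). lra. }
  exists m. split; [|split; auto].
  - destruct (le_lt_dec M0 m) as [HmM|HmM]; auto. exfalso.
    pose proof (star_disc_le1 mu x m Hm1). apply lt_INR in HmM.
    assert (INR n / 2048 / INR m <= 1) by lra.
    apply (Rmult_le_compat_r (INR m)) in H0; [|lra].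
    replace (INR n / 2048 / INR m * INR m) with (INR n / 2048) in H0 by (field; lra). lra.
  - pose proof (ln_lt_of_lt_pow2 m n Hm1 Hm). apply Rle_ge. eapply Rle_trans; [|apply Hd].
    unfold Rdiv. apply Rmult_le_compat_r; [apply Rlt_le, Rinv_0_lt_compat; lra|lra].
Qed.

Theorem theorem3p2 (mu : prob_measure) :
  (exists c : R, forall N : nat, (1 <= N)%nat ->
     exists x : nat -> R,
       (forall i, (1 <= i <= N)%nat -> 0 <= x i <= 1) /\
       star_disc mu x N <= c / INR N)
  /\
  (exists (x : nat -> R) (c : R),
     (forall k, (1 <= k)%nat -> 0 <= x k <= 1) /\
     forall N : nat, (2 <= N)%nat ->
       star_disc mu x N <= c * ln (INR N) / INR N)
  /\
  (no_atoms mu ->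
     (forall (N : nat) (x : nat -> R), (1 <= N)%nat ->
        (forall i, (1 <= i <= N)%nat -> 0 <= x i <= 1) ->
        star_disc mu x N >= 1 / (2 * INR N))
     /\
     (exists c : R, c > 0 /\
        forall x : nat -> R,
          (forall k, (1 <= k)%nat -> 0 <= x k <= 1) ->
          forall M : nat, exists N : nat, (M <= N)%nat /\ (1 <= N)%nat /\
            star_disc mu x N >= c * ln (INR N) / INR N)).
Proof.
  split; [|split].
  - exists 1. apply exists_points_star_disc_le_inv.
  - exists (fun i => quantile mu (vdc (pred i))), vdc_const. split.
    + intros k _. apply quantile_range, vdc_range.
    + apply vdc_quantile_star_disc_le.
  - intros Hna. split.
    + intros N x HN Hx. apply star_disc_ge_half_inv; auto.
    + exists (/ 2048). split; [lra|]. intros x _. apply star_disc_log_infinitely_often; auto.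
Qed.
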